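(* Let $(\Omega,P,\pi)$ be a finite irreducible reversible Markov chain (in continuous time) and $\mu$ a probability distribution on $\Omega$. Then for any $0<\epsilon<\delta<1$ and any $0<\beta\le\gamma<1$, $$\mathrm{hit}_{\gamma,\mu}(\delta)\le \mathrm{hit}_{\beta,\mu}(\delta)\le \mathrm{hit}_{\gamma,\mu}(\delta-\epsilon)+\beta^{-1}t_{\mathrm{rel}}\log\Big(\frac{1-\beta}{(1-\gamma)\epsilon}\Big).$$
   Context: Continuous-time chain with heat kernel $H_t(x,y)=\sum_{k\ge0}e^{-t}\frac{t^k}{k!}P^k(x,y)$; reversible means $\pi(x)P(x,y)=\pi(y)P(y,x)$. $\mathrm P_\mu$: law of the chain with $X_0\sim\mu$. $t_{\mathrm{rel}}:=(1-\lambda_2)^{-1}$, $\lambda_2$ the second largest eigenvalue of $P$. $T_B:=\inf\{t\ge0:X_t\in B\}$; $\mathrm{hit}_{\delta,\mu}(q):=\inf\{t\ge0:\max_{B:\pi(B)\ge\delta}\mathrm P_\mu[T_B>t]\le q\}$. *)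

From Stdlib Require Import Reals Lra List ClassicalEpsilon.
Import ListNotations.
Open Scope R_scope.

(* State space Omega = {0, ..., n-1}; functions on nat are only read there. *)

Definition fsum (n : nat) (f : nat -> R) : R :=
  fold_right Rplus 0 (map f (seq 0 n)).

Definition stochastic (n : nat) (P : nat -> nat -> R) : Prop :=
  (forall x y, (x < n)%nat -> (y < n)%nat -> 0 <= P x y) /\
  (forall x, (x < n)%nat -> fsum n (fun y => P x y) = 1).

Fixpoint matpow (n : nat) (P : nat -> nat -> R) (k : nat) : nat -> nat -> R :=
  match k with
  | O => fun x y => if Nat.eqb x y then 1 else 0
  | S k' => fun x y => fsum n (fun z => matpow n P k' x z * P z y)
  end.

Definition irreducible (n : nat) (P : nat -> nat -> R) : Prop :=
  forall x y, (x < n)%nat -> (y < n)%nat -> exists k, 0 < matpow n P k x y.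

Definition prob_dist (n : nat) (mu : nat -> R) : Prop :=
  (forall x, (x < n)%nat -> 0 <= mu x) /\ fsum n mu = 1.

Definition reversible (n : nat) (P : nat -> nat -> R) (pi : nat -> R) : Prop :=
  forall x y, (x < n)%nat -> (y < n)%nat -> pi x * P x y = pi y * P y x.

Definition eigenvalue (n : nat) (P : nat -> nat -> R) (lam : R) : Prop :=
  exists v : nat -> R, (exists x, (x < n)%nat /\ v x <> 0) /\
    forall x, (x < n)%nat -> fsum n (fun y => P x y * v y) = lam * v x.

(* lambda_2: the second largest eigenvalue of P.  For an irreducible chain the
   eigenvalue 1 is simple (and, P being reversible, all eigenvalues are real),
   so lambda_2 is the largest eigenvalue different from 1. *)
Definition is_lambda2 (n : nat) (P : nat -> nat -> R) (lam2 : R) : Prop :=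
  eigenvalue n P lam2 /\ lam2 <> 1 /\
  forall lam, eigenvalue n P lam -> lam <> 1 -> lam <= lam2.

Definition t_rel (lam2 : R) : R := / (1 - lam2).

Definition measure (n : nat) (pi : nat -> R) (B : nat -> bool) : R :=
  fsum n (fun x => if B x then pi x else 0).

(* Discrete skeleton: s_k(y) = P_mu[Y_0,...,Y_k all outside B, Y_k = y]. *)
Fixpoint surv_vec (n : nat) (P : nat -> nat -> R) (mu : nat -> R)
    (B : nat -> bool) (k : nat) : nat -> R :=
  match k with
  | O => fun y => if B y then 0 else mu y
  | S k' => fun y => if B y then 0
                     else fsum n (fun x => surv_vec n P mu B k' x * P x y)
  end.

(* Continuous-time chain (rate-1 Poisson clock, heat kernel
   H_t = sum_k e^{-t} t^k/k! P^k):
   P_mu[T_B > t] = sum_k e^{-t} t^k / k! * P_mu[Y_0..Y_k outside B]. *)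
Definition surv_term (n : nat) (P : nat -> nat -> R) (mu : nat -> R)
    (B : nat -> bool) (t : R) (k : nat) : R :=
  exp (- t) * t ^ k / INR (Factorial.fact k) * fsum n (surv_vec n P mu B k).

Definition tail_prob (n : nat) (P : nat -> nat -> R) (mu : nat -> R)
    (B : nat -> bool) (t : R) : R :=
  epsilon (inhabits 0) (fun l => infinite_sum (surv_term n P mu B t) l).

Definition is_glb (E : R -> Prop) (m : R) : Prop :=
  (forall x, E x -> m <= x) /\ (forall b, (forall x, E x -> b <= x) -> b <= m).

Definition hit_set (n : nat) (P : nat -> nat -> R) (pi mu : nat -> R)
    (delta q : R) (t : R) : Prop :=
  0 <= t /\
  forall B : nat -> bool, delta <= measure n pi B -> tail_prob n P mu B t <= q.

Definition hit (n : nat) (P : nat -> nat -> R) (pi mu : nat -> R)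
    (delta q : R) : R :=
  epsilon (inhabits 0) (fun m => is_glb (hit_set n P pi mu delta q) m).

(* Put gap := 1 - lam2 = 1 / t_rel and write T_B for the hitting time of B.  The first
   inequality holds because a larger size threshold constrains fewer sets.

   Reversibility makes P self-adjoint in L^2(pi).  The supremum of the Rayleigh quotient of a
   self-adjoint matrix is an eigenvalue, so by the definition of lambda_2 the operator
   P - (1 - lam2) 1 pi^T has quadratic form at most lam2; this is the Poincare inequality.
   Applied to functions vanishing on a set A it shows that the chain killed on A contracts
   L^2(pi) by 1 - pi(A) gap, and summing the lazy version of the killed chain over the Poisson
   clock gives P_pi[T_A > s] <= (1 - pi(A)) exp (- s pi(A) gap).

   Now fix A with pi(A) >= beta and let G be the set of starting points x with
   P_x[T_A > s] <= eps.  Markov's inequality gives eps pi(G^c) <= P_pi[T_A > s], so for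
   s = t_rel / beta * log ((1 - beta) / ((1 - gamma) eps)) we get pi(G) >= gamma.  As A is
   contained in G, the strong Markov property at T_G gives
   P_mu[T_A > t + s] <= P_mu[T_G > t] + eps, so t + s is admissible for (beta, delta) whenever
   t is admissible for (gamma, delta - eps). *)

From Stdlib Require Import Reals Lra Lia List Factorial Bool ClassicalEpsilon.
Open Scope R_scope.

Lemma fold_right_Rplus_app (l1 l2 : list R) :
  fold_right Rplus 0 (l1 ++ l2) = fold_right Rplus 0 l1 + fold_right Rplus 0 l2.
Proof. induction l1; simpl; [ring | rewrite IHl1; ring]. Qed.

Lemma fsum_S n f : fsum (S n) f = fsum n f + f n.
Proof.
  unfold fsum. rewrite seq_S, map_app, fold_right_Rplus_app. simpl. ring.
Qed.

Lemma fsum_Sl n g : fsum (S n) g = g 0%nat + fsum n (fun i => g (S i)).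
Proof.
  induction n; [unfold fsum; simpl; ring|].
  rewrite fsum_S, IHn, fsum_S. ring.
Qed.

Lemma fsum_ext n f g : (forall x, (x < n)%nat -> f x = g x) -> fsum n f = fsum n g.
Proof.
  induction n; intros H; [reflexivity|].
  rewrite !fsum_S, IHn by (intros; apply H; lia). rewrite H by lia. reflexivity.
Qed.

Lemma fsum_plus n f g : fsum n (fun x => f x + g x) = fsum n f + fsum n g.
Proof. induction n; [unfold fsum; simpl; ring|]. rewrite !fsum_S, IHn. ring. Qed.

Lemma fsum_scal_l n c f : fsum n (fun x => c * f x) = c * fsum n f.
Proof. induction n; [unfold fsum; simpl; ring|]. rewrite !fsum_S, IHn. ring. Qed.

Lemma fsum_scal_r n c f : fsum n (fun x => f x * c) = fsum n f * c.
Proof. induction n; [unfold fsum; simpl; ring|]. rewrite !fsum_S, IHn. ring. Qed.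

Lemma fsum_minus n f g : fsum n (fun x => f x - g x) = fsum n f - fsum n g.
Proof. induction n; [unfold fsum; simpl; ring|]. rewrite !fsum_S, IHn. ring. Qed.

Lemma fsum_zero n : fsum n (fun _ => 0) = 0.
Proof. induction n; [reflexivity|]. rewrite fsum_S, IHn. ring. Qed.

Lemma fsum_zero_on n f : (forall x, (x < n)%nat -> f x = 0) -> fsum n f = 0.
Proof. intros H. rewrite (fsum_ext n f (fun _ => 0)) by exact H. apply fsum_zero. Qed.

Lemma fsum_le n f g : (forall x, (x < n)%nat -> f x <= g x) -> fsum n f <= fsum n g.
Proof.
  induction n; intros H; [unfold fsum; simpl; lra|].
  rewrite !fsum_S. assert (fsum n f <= fsum n g) by (apply IHn; intros; apply H; lia).
  assert (f n <= g n) by (apply H; lia). lra.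
Qed.

Lemma fsum_nonneg n f : (forall x, (x < n)%nat -> 0 <= f x) -> 0 <= fsum n f.
Proof. intros H. rewrite <- (fsum_zero n). apply fsum_le. exact H. Qed.

Lemma fsum_swap n m (F : nat -> nat -> R) :
  fsum n (fun x => fsum m (fun y => F x y)) = fsum m (fun y => fsum n (fun x => F x y)).
Proof.
  induction n.
  - symmetry. apply fsum_zero_on. reflexivity.
  - rewrite fsum_S, IHn, <- fsum_plus. apply fsum_ext. intros. rewrite fsum_S. reflexivity.
Qed.

Lemma fsum_term_le n f x :
  (forall y, (y < n)%nat -> 0 <= f y) -> (x < n)%nat -> f x <= fsum n f.
Proof.
  induction n; intros H Hx; [lia|].
  rewrite fsum_S. assert (0 <= fsum n f) by (apply fsum_nonneg; intros; apply H; lia).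
  destruct (Nat.eq_dec x n) as [->|Hne]; [lra|].
  assert (f x <= fsum n f) by (apply IHn; [intros; apply H; lia | lia]).
  assert (0 <= f n) by (apply H; lia). lra.
Qed.

Lemma fsum_nonneg_eq0 n f : (forall y, (y < n)%nat -> 0 <= f y) -> fsum n f = 0 ->
  forall x, (x < n)%nat -> f x = 0.
Proof.
  intros H H0 x Hx. assert (f x <= fsum n f) by (apply fsum_term_le; auto).
  assert (0 <= f x) by auto. lra.
Qed.

Lemma fsum_sum_f_R0 g j : fsum (S j) g = sum_f_R0 g j.
Proof. induction j; [unfold fsum; simpl; ring|]. rewrite fsum_S, IHj. reflexivity. Qed.

Definition kron (x y : nat) : R := if Nat.eqb x y then 1 else 0.

Lemma kron_sym x y : kron x y = kron y x.
Proof. unfold kron. rewrite Nat.eqb_sym. reflexivity. Qed.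

Lemma kron_nonneg x y : 0 <= kron x y.
Proof. unfold kron. destruct (Nat.eqb x y); lra. Qed.

Lemma fsum_kron_l n g x : (x < n)%nat -> fsum n (fun y => kron x y * g y) = g x.
Proof.
  induction n; intros Hx; [lia|].
  rewrite fsum_S. unfold kron at 2. destruct (Nat.eq_dec x n) as [->|Hne].
  - rewrite Nat.eqb_refl, fsum_zero_on; [ring|].
    intros y Hy. unfold kron. destruct (Nat.eqb_spec n y); [lia|ring].
  - rewrite IHn by lia. destruct (Nat.eqb_spec x n); [lia|ring].
Qed.

Lemma fsum_kron_r n g x : (x < n)%nat -> fsum n (fun y => g y * kron y x) = g x.
Proof.
  intros Hx. rewrite <- (fsum_kron_l n g x Hx). apply fsum_ext. intros y _.
  rewrite kron_sym. ring.
Qed.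

Lemma exists_argmax n (f : nat -> R) : (0 < n)%nat ->
  exists x, (x < n)%nat /\ forall y, (y < n)%nat -> f y <= f x.
Proof.
  induction n as [|[|n] IH]; intros Hn; [lia| |].
  - exists 0%nat. split; [lia|]. intros y Hy. replace y with 0%nat by lia. lra.
  - destruct IH as [x [Hx H]]; [lia|].
    destruct (Rle_dec (f (S n)) (f x)).
    + exists x. split; [lia|]. intros y Hy.
      destruct (Nat.eq_dec y (S n)); [subst; auto | apply H; lia].
    + exists (S n). split; [lia|]. intros y Hy.
      destruct (Nat.eq_dec y (S n)); [subst; lra|].
      assert (f y <= f x) by (apply H; lia). lra.
Qed.

Lemma glb_exists (E : R -> Prop) m0 :
  (exists x, E x) -> (forall x, E x -> m0 <= x) -> exists m, is_glb E m.
Proof.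
  intros Hne Hlow.
  destruct (completeness (fun x => E (- x))) as [m [Hub Hlub]].
  - exists (- m0). intros x Hx. apply Hlow in Hx. lra.
  - destruct Hne as [x Hx]. exists (- x). rewrite Ropp_involutive. auto.
  - exists (- m). split.
    + intros x Hx. assert (- x <= m) by (apply Hub; rewrite Ropp_involutive; auto). lra.
    + intros b Hb. assert (m <= - b) by (apply Hlub; intros x Hx; apply Hb in Hx; lra). lra.
Qed.

(** * Symmetric matrices and their top eigenvalue *)

From mathcomp Require all_boot all_algebra Rstruct.
Module LinearAlgebra.
Import all_boot all_algebra Rstruct.
Import GRing.Theory.
Local Open Scope ring_scope.

Lemma seq_iota s n : List.seq s n = iota s n.
Proof. by elim: n s => //= n IH s; rewrite IH. Qed.

Lemma fsum_big n (g : nat -> R) : fsum n g = \sum_(i < n) g i.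
Proof.
rewrite /fsum seq_iota -(big_mkord xpredT) /index_iota subn0.
elim: (iota 0 n) => [|a l IH]; first by rewrite big_nil.
by rewrite big_cons /= IH.
Qed.

Definition ext (n : nat) (v : 'I_n -> R) (k : nat) : R :=
  match insub k with Some i => v i | None => 0 end.
Arguments ext {n}.

Lemma extE n v (i : 'I_n) : ext v i = v i.
Proof. by rewrite /ext valK. Qed.

Lemma kernel_or_inverse (n : nat) (M : nat -> nat -> R) :
  (exists v : nat -> R, (exists x, lt x n /\ v x <> 0) /\
      forall x, lt x n -> fsum n (fun y => M x y * v y) = 0)
  \/ (exists N : nat -> nat -> R, forall f x, lt x n ->
        fsum n (fun y => M x y * fsum n (fun z => N y z * f z)) = f x).
Proof.
pose A : 'M[R]_n := \matrix_(i, j) M j i.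
have [/det0P [v nz vA] | uA] := boolP (\det A == 0).
  left; exists (ext (fun i => v 0 i)); split.
    have [i vi] : exists i, v 0 i != 0.
      apply/existsP; apply: contraR nz; rewrite negb_exists => /forallP H.
      by apply/eqP/rowP => i; rewrite mxE; apply/eqP; have := H i; rewrite negbK.
    by exists i; split; [apply/ltP; exact: ltn_ord | rewrite extE; apply/eqP].
  move=> x /ltP xn; have := congr1 (fun w : 'rV[R]_n => w 0 (Ordinal xn)) vA.
  rewrite !mxE fsum_big => H; rewrite -[X in _ = X]H; apply: eq_bigr => i _.
  by rewrite extE mulrC /A mxE.
right; have Au : A \in unitmx by rewrite unitmxE unitfE.
pose B := invmx A.
exists (fun y z => ext (fun j : 'I_n => ext (fun i : 'I_n => B j i) y) z).
move=> f x /ltP xn.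
pose fr : 'rV[R]_n := \row_i f i.
have := congr1 (fun w : 'rV[R]_n => w 0 (Ordinal xn)) (esym (mulmxKV Au fr)).
rewrite !mxE => ->; rewrite fsum_big; apply: eq_bigr => j _.
rewrite [A _ _]mxE mulrC; congr (_ * _); rewrite fsum_big !mxE.
by apply: eq_bigr => k _; rewrite !mxE !extE mulrC.
Qed.
End LinearAlgebra.

Section WeightedInner.
Variable n : nat.
Variable w : nat -> R.
Hypothesis Hw : forall x, (x < n)%nat -> 0 < w x.

Definition inner (g h : nat -> R) : R := fsum n (fun x => w x * g x * h x).
Definition matvec (Z : nat -> nat -> R) (h : nat -> R) : nat -> R :=
  fun x => fsum n (fun y => Z x y * h y).
Definition self_adjoint (Z : nat -> nat -> R) : Prop :=
  forall x y, (x < n)%nat -> (y < n)%nat -> w x * Z x y = w y * Z y x.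
Definition positive_semidef (Z : nat -> nat -> R) : Prop :=
  forall g, 0 <= inner g (matvec Z g).

Lemma inner_ext g1 g2 h1 h2 : (forall x, (x < n)%nat -> g1 x = g2 x) ->
  (forall x, (x < n)%nat -> h1 x = h2 x) -> inner g1 h1 = inner g2 h2.
Proof. intros Hg Hh. apply fsum_ext. intros. rewrite Hg, Hh by auto. ring. Qed.

Lemma inner_comm g h : inner g h = inner h g.
Proof. apply fsum_ext. intros. ring. Qed.

Lemma inner_linear_r g a h1 b h2 :
  inner g (fun x => a * h1 x + b * h2 x) = a * inner g h1 + b * inner g h2.
Proof. unfold inner. rewrite <- !fsum_scal_l, <- fsum_plus. apply fsum_ext. intros. ring. Qed.

Lemma inner_linear_l g a h1 b h2 :
  inner (fun x => a * h1 x + b * h2 x) g = a * inner h1 g + b * inner h2 g.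
Proof. rewrite inner_comm, inner_linear_r, (inner_comm g h1), (inner_comm g h2). ring. Qed.

Lemma inner_fsum_r g (c : nat -> R) (h : nat -> nat -> R) m :
  inner g (fun y => fsum m (fun i => c i * h i y)) = fsum m (fun i => c i * inner g (h i)).
Proof.
  unfold inner. transitivity (fsum n (fun x => fsum m (fun i => c i * (w x * g x * h i x)))).
  - apply fsum_ext. intros. rewrite <- fsum_scal_l. apply fsum_ext. intros. ring.
  - rewrite fsum_swap. apply fsum_ext. intros. rewrite <- fsum_scal_l. reflexivity.
Qed.

Lemma inner_self_nonneg g : 0 <= inner g g.
Proof. apply fsum_nonneg. intros x Hx. specialize (Hw x Hx). nra. Qed.

Lemma inner_self_eq0 g : inner g g = 0 -> forall x, (x < n)%nat -> g x = 0.
Proof.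
  intros H x Hx.
  assert (w x * g x * g x = 0).
  { apply (fsum_nonneg_eq0 n (fun x => w x * g x * g x)); auto.
    intros y Hy. specialize (Hw y Hy). nra. }
  specialize (Hw x Hx). assert (g x * g x = 0) by nra. nra.
Qed.

Lemma inner_self_pos g : (exists x, (x < n)%nat /\ g x <> 0) -> 0 < inner g g.
Proof.
  intros [x [Hx Hg]]. destruct (inner_self_nonneg g) as [H|H]; auto.
  exfalso. apply Hg. apply inner_self_eq0; auto.
Qed.

Lemma inner_zero_l g h : (forall x, (x < n)%nat -> g x = 0) -> inner g h = 0.
Proof. intros H. apply fsum_zero_on. intros. rewrite H by auto. ring. Qed.

Lemma matvec_linear Z a h1 b h2 x :
  matvec Z (fun y => a * h1 y + b * h2 y) x = a * matvec Z h1 x + b * matvec Z h2 x.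
Proof. unfold matvec. rewrite <- !fsum_scal_l, <- fsum_plus. apply fsum_ext. intros. ring. Qed.

Lemma matvec_ext Z h1 h2 x :
  (forall y, (y < n)%nat -> h1 y = h2 y) -> matvec Z h1 x = matvec Z h2 x.
Proof. intros H. apply fsum_ext. intros. rewrite H by auto. reflexivity. Qed.

Lemma matvec_kron h x : (x < n)%nat -> matvec kron h x = h x.
Proof. apply fsum_kron_l. Qed.

Lemma inner_matvec_kron g h : inner g (matvec kron h) = inner g h.
Proof. apply inner_ext; auto. intros. apply matvec_kron; auto. Qed.

Lemma kron_self_adjoint : self_adjoint kron.
Proof.
  intros x y _ _. unfold kron. rewrite Nat.eqb_sym.
  destruct (Nat.eqb_spec y x); [subst|]; ring.
Qed.

Lemma self_adjoint_inner Z g h :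
  self_adjoint Z -> inner (matvec Z g) h = inner g (matvec Z h).
Proof.
  intros HZ. unfold inner, matvec.
  transitivity (fsum n (fun x => fsum n (fun y => w x * Z x y * g y * h x))).
  - apply fsum_ext. intros x Hx. rewrite <- fsum_scal_l, <- fsum_scal_r. apply fsum_ext.
    intros. ring.
  - rewrite fsum_swap. apply fsum_ext. intros y Hy. rewrite <- fsum_scal_l.
    apply fsum_ext. intros x Hx. rewrite (HZ x y Hx Hy). ring.
Qed.

Lemma nonneg_quadratic_discriminant a b c :
  (forall x, 0 <= a + 2 * b * x + c * x * x) -> b * b <= a * c.
Proof.
  intros H.
  assert (Ha : 0 <= a) by (specialize (H 0); lra).
  destruct (Rlt_le_dec 0 c) as [Hc|Hc].
  - specialize (H (- b / c)).
    replace (a + 2 * b * (- b / c) + c * (- b / c) * (- b / c)) with (a - b * b / c)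
      in H by (field; lra).
    assert (b * b / c * c <= a * c) by (apply Rmult_le_compat_r; lra).
    replace (b * b / c * c) with (b * b) in H0 by (field; lra). lra.
  - destruct (Req_dec b 0) as [->|Hb].
    + destruct (Req_dec c 0) as [->|Hc0]; [lra|].
      set (x := sqrt ((a + 1) / - c)).
      assert (Hx : x * x = (a + 1) / - c).
      { apply sqrt_sqrt. apply Rmult_le_pos; [lra | left; apply Rinv_0_lt_compat; lra]. }
      specialize (H x). assert (c * x * x = - (a + 1)).
      { rewrite Rmult_assoc, Hx. field. lra. }
      lra.
    + specialize (H (- (a + 1) / (2 * b))).
      assert (2 * b * (- (a + 1) / (2 * b)) = - (a + 1)) by (field; auto).
      assert (c * (- (a + 1) / (2 * b)) * (- (a + 1) / (2 * b)) <= 0).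
      { pose proof (Rle_0_sqr (- (a + 1) / (2 * b))). unfold Rsqr in *. nra. }
      lra.
Qed.

Lemma psd_cauchy_schwarz Z u v : self_adjoint Z -> positive_semidef Z ->
  inner u (matvec Z v) * inner u (matvec Z v) <= inner u (matvec Z u) * inner v (matvec Z v).
Proof.
  intros HZ Hpsd. apply nonneg_quadratic_discriminant. intros x.
  specialize (Hpsd (fun y => 1 * u y + x * v y)).
  rewrite (inner_ext _ _ (matvec Z (fun y => 1 * u y + x * v y))
             (fun y => 1 * matvec Z u y + x * matvec Z v y)) in Hpsd
    by (intros; apply matvec_linear || reflexivity).
  rewrite inner_linear_l, !inner_linear_r in Hpsd.
  assert (inner v (matvec Z u) = inner u (matvec Z v))
    by (rewrite <- self_adjoint_inner by auto; apply inner_comm).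
  nra.
Qed.

Lemma cauchy_schwarz u v : inner u v * inner u v <= inner u u * inner v v.
Proof.
  pose proof (psd_cauchy_schwarz kron u v kron_self_adjoint) as H.
  rewrite !inner_matvec_kron in H. apply H.
  intros g. rewrite inner_matvec_kron. apply inner_self_nonneg.
Qed.

Lemma inner_pointwise_bound g x : (x < n)%nat -> g x * g x <= inner g g * / w x.
Proof.
  intros Hx. pose proof (Hw x Hx).
  assert (w x * g x * g x <= inner g g).
  { apply (fsum_term_le n (fun x => w x * g x * g x)); auto.
    intros y Hy. specialize (Hw y Hy). nra. }
  apply (Rmult_le_reg_l (w x)); auto.
  replace (w x * (inner g g * / w x)) with (inner g g) by (field; lra). lra.
Qed.

Lemma quadratic_form_bounded Z : exists C, 0 < C /\
  forall g, inner g (matvec Z g) <= C * inner g g.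
Proof.
  set (K := fsum n (fun x => fsum n (fun y => Rabs (w x * Z x y) * (/ w x + / w y)))).
  assert (HK : 0 <= K).
  { apply fsum_nonneg. intros x Hx. apply fsum_nonneg. intros y Hy.
    apply Rmult_le_pos; [apply Rabs_pos|].
    pose proof (Rinv_0_lt_compat _ (Hw x Hx)). pose proof (Rinv_0_lt_compat _ (Hw y Hy)). lra. }
  exists (1 + K). split; [lra|]. intros g.
  assert (inner g (matvec Z g) <= K * inner g g).
  { unfold K. rewrite <- fsum_scal_r. unfold inner at 1, matvec. apply fsum_le. intros x Hx.
    rewrite <- fsum_scal_l, <- fsum_scal_r. apply fsum_le. intros y Hy.
    (* [|g x g y| <= (g x^2 + g y^2) / 2] and each square is at most [inner g g / w] *)
    pose proof (inner_pointwise_bound g x Hx). pose proof (inner_pointwise_bound g y Hy).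
    assert (Rabs (g x * g y) <= inner g g * (/ w x + / w y)).
    { apply Rabs_le. pose proof (Rle_0_sqr (g x + g y)). pose proof (Rle_0_sqr (g x - g y)).
      unfold Rsqr in *. nra. }
    assert ((w x * Z x y) * (g x * g y) <= Rabs (w x * Z x y) * Rabs (g x * g y))
      by (rewrite <- Rabs_mult; apply Rle_abs).
    pose proof (Rabs_pos (w x * Z x y)).
    replace (w x * g x * (Z x y * g y)) with ((w x * Z x y) * (g x * g y)) by ring.
    eapply Rle_trans; [eassumption|]. rewrite Rmult_assoc.
    apply Rmult_le_compat_l; [auto | lra]. }
  pose proof (inner_self_nonneg g). nra.
Qed.

Lemma psd_invertible_coercive Z N : self_adjoint Z -> positive_semidef Z ->
  (forall f x, (x < n)%nat -> matvec Z (matvec N f) x = f x) ->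
  exists c, 0 < c /\ forall g, c * inner g g <= inner g (matvec Z g).
Proof.
  intros HZ Hpsd HN.
  destruct (quadratic_form_bounded N) as [C [HC HCb]].
  exists (/ C). split; [apply Rinv_0_lt_compat; auto|]. intros g.
  set (u := matvec N g).
  pose proof (psd_cauchy_schwarz Z u g HZ Hpsd) as Hcs.
  assert (E1 : inner u (matvec Z g) = inner g g).
  { rewrite <- self_adjoint_inner by auto. apply inner_ext; intros; [apply HN|]; auto. }
  assert (E2 : inner u (matvec Z u) = inner g (matvec N g)).
  { rewrite (inner_ext u u (matvec Z u) g); [apply inner_comm | auto | intros; apply HN; auto]. }
  rewrite E1, E2 in Hcs. specialize (HCb g). specialize (Hpsd g).
  pose proof (inner_self_nonneg g).
  assert (inner g g * inner g g <= C * inner g g * inner g (matvec Z g)) by nra.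
  assert (inner g g <= C * inner g (matvec Z g)).
  { destruct H as [H|H]; [apply (Rmult_le_reg_l (inner g g)); nra | rewrite <- H; nra]. }
  apply (Rmult_le_reg_l C); auto. rewrite <- Rmult_assoc, Rinv_r by lra. lra.
Qed.

Definition rayleigh_bound (S : nat -> nat -> R) (t : R) : Prop :=
  forall g, inner g (matvec S g) <= t * inner g g.

Lemma rayleigh_bound_glb S ts : is_glb (rayleigh_bound S) ts -> rayleigh_bound S ts.
Proof.
  intros [Hlow Hgreat] g.
  destruct (Rle_dec (inner g (matvec S g)) (ts * inner g g)) as [H|H]; auto. exfalso.
  destruct (inner_self_nonneg g) as [Hg|Hg].
  - set (t1 := inner g (matvec S g) / inner g g).
    assert (Ht1 : ts < t1).
    { apply (Rmult_lt_reg_r (inner g g)); auto. unfold t1, Rdiv.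
      rewrite Rmult_assoc, Rinv_l by lra. lra. }
    assert (t1 <= ts); [|lra].
    apply Hgreat. intros t Ht. specialize (Ht g).
    apply (Rmult_le_reg_r (inner g g)); auto. unfold t1, Rdiv.
    rewrite Rmult_assoc, Rinv_l by lra. lra.
  - apply H. rewrite (inner_zero_l g), <- Hg by (apply inner_self_eq0; auto). lra.
Qed.

Lemma eigenvector_above S c h0 : self_adjoint S -> c * inner h0 h0 < inner h0 (matvec S h0) ->
  exists v th, (exists x, (x < n)%nat /\ v x <> 0) /\ c < th /\
    forall x, (x < n)%nat -> matvec S v x = th * v x.
Proof.
  intros HS Hh0.
  assert (Hpos : 0 < inner h0 h0).
  { destruct (inner_self_nonneg h0) as [H|H]; auto.
    pose proof (inner_self_eq0 h0 (eq_sym H)) as Hz.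
    rewrite (inner_zero_l h0 h0), (inner_zero_l h0 (matvec S h0)) in Hh0 by exact Hz. lra. }
  assert (Hlow : forall t, rayleigh_bound S t -> c < t).
  { intros t Ht. specialize (Ht h0). apply (Rmult_lt_reg_r (inner h0 h0)); auto. lra. }
  destruct (glb_exists (rayleigh_bound S) c) as [ts Hts].
  - destruct (quadratic_form_bounded S) as [C [_ HC]]. exists C. exact HC.
  - intros t Ht. apply Rlt_le, Hlow, Ht.
  - pose proof (rayleigh_bound_glb S ts Hts) as Hbound.
    (* the top of the spectrum [ts] makes [ts I - S] positive semidefinite but not coercive,
       hence singular *)
    set (M := fun x y => ts * kron x y - S x y).
    assert (HmvM : forall h x, (x < n)%nat -> matvec M h x = ts * h x - matvec S h x).
    { intros h x Hx. unfold matvec, M.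
      rewrite (fsum_ext n _ (fun y => ts * (kron x y * h y) - S x y * h y)) by (intros; ring).
      rewrite fsum_minus, fsum_scal_l. fold (matvec kron h x). rewrite matvec_kron; auto. }
    assert (HinM : forall g, inner g (matvec M g) = ts * inner g g - inner g (matvec S g)).
    { intros g. rewrite (inner_ext g g (matvec M g) (fun x => ts * g x + (-1) * matvec S g x))
        by (auto; intros; rewrite HmvM; auto; ring).
      rewrite inner_linear_r. ring. }
    assert (HMsa : self_adjoint M).
    { intros x y Hx Hy. unfold M. rewrite (kron_sym y x). pose proof (HS x y Hx Hy).
      unfold kron. destruct (Nat.eqb_spec x y); [subst; ring | nra]. }
    assert (HMpsd : positive_semidef M).
    { intros g. rewrite HinM. specialize (Hbound g). lra. }
    destruct (LinearAlgebra.kernel_or_inverse n M) as [[v [Hv Hker]] | [N HN]].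
    + exists v, ts. split; [exact Hv|]. split; [apply Hlow; exact Hbound|]. intros x Hx.
      specialize (Hker x Hx). change (matvec M v x = 0) in Hker. rewrite HmvM in Hker; auto. lra.
    + exfalso. destruct (psd_invertible_coercive M N HMsa HMpsd HN) as [c2 [Hc2 Hcoer]].
      assert (ts <= ts - c2); [|lra].
      apply (proj1 Hts). intros g. specialize (Hcoer g). rewrite HinM in Hcoer. lra.
Qed.

End WeightedInner.

(** * Reversible chains and the Poincare inequality *)

Lemma prob_dist_pos_n n pi : prob_dist n pi -> (0 < n)%nat.
Proof.
  intros [_ Hs]. destruct n; [|lia]. unfold fsum in Hs. simpl in Hs. lra.
Qed.

Section ReversibleChain.
Variable n : nat.
Variable P : nat -> nat -> R.
Variable pi : nat -> R.
Hypothesis Hst : stochastic n P.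
Hypothesis Hpi : forall x, (x < n)%nat -> 0 < pi x.
Hypothesis Hpid : prob_dist n pi.
Hypothesis Hrev : reversible n P pi.

Notation inner := (inner n pi).
Notation matvec := (matvec n).

Lemma stochastic_nonneg x y : (x < n)%nat -> (y < n)%nat -> 0 <= P x y.
Proof. destruct Hst. auto. Qed.

Lemma stochastic_row x : (x < n)%nat -> fsum n (fun y => P x y) = 1.
Proof. destruct Hst. auto. Qed.

Definition mean (h : nat -> R) : R := fsum n (fun x => pi x * h x).

Lemma reversible_stationary y : (y < n)%nat -> fsum n (fun x => pi x * P x y) = pi y.
Proof.
  intros Hy. rewrite (fsum_ext n _ (fun x => pi y * P y x)).
  - rewrite fsum_scal_l, stochastic_row by auto. ring.
  - intros. symmetry. apply Hrev; auto.
Qed.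

Lemma mean_matvec h : mean (matvec P h) = mean h.
Proof.
  unfold mean, matvec.
  transitivity (fsum n (fun x => fsum n (fun y => pi x * P x y * h y))).
  - apply fsum_ext. intros. rewrite <- fsum_scal_l. apply fsum_ext. intros. ring.
  - rewrite fsum_swap. apply fsum_ext. intros y Hy.
    rewrite fsum_scal_r, reversible_stationary; auto.
Qed.

Lemma substochastic_contraction Z h : self_adjoint n pi Z ->
  (forall x y, (x < n)%nat -> (y < n)%nat -> 0 <= Z x y) ->
  (forall x, (x < n)%nat -> fsum n (fun y => Z x y) <= 1) ->
  - inner h h <= inner h (matvec Z h) /\ inner h (matvec Z h) <= inner h h.
Proof.
  intros HZ Hnn Hrow.
  (* expand [sum_{x,y} pi x Z x y (h x + s h y)^2 >= 0] for [s = 1] and [s = -1] *)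
  set (D := fsum n (fun x => fsum n (fun y => pi x * Z x y * (h x * h x)))).
  assert (HD' : fsum n (fun x => fsum n (fun y => pi x * Z x y * (h y * h y))) = D).
  { unfold D. rewrite fsum_swap. apply fsum_ext. intros y Hy. apply fsum_ext.
    intros x Hx. rewrite (HZ x y Hx Hy). ring. }
  assert (HD : D <= inner h h).
  { apply fsum_le. intros x Hx.
    rewrite (fsum_ext n _ (fun y => pi x * (h x * h x) * Z x y)) by (intros; ring).
    rewrite fsum_scal_l. pose proof (Hrow x Hx). pose proof (Hpi x Hx).
    assert (0 <= pi x * (h x * h x)) by (apply Rmult_le_pos; [lra | nra]).
    replace (pi x * h x * h x) with (pi x * (h x * h x) * 1) by ring.
    apply Rmult_le_compat_l; auto. }
  assert (Hsq : forall s, 0 <= D + (s * s) * D + (2 * s) * inner h (matvec Z h)).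
  { intros s. rewrite <- HD' at 2.
    replace (D + s * s * fsum n (fun x => fsum n (fun y => pi x * Z x y * (h y * h y)))
               + 2 * s * inner h (matvec Z h))
      with (fsum n (fun x => fsum n (fun y => pi x * Z x y * ((h x + s * h y) * (h x + s * h y))))).
    - apply fsum_nonneg. intros x Hx. apply fsum_nonneg. intros y Hy.
      pose proof (Hpi x Hx). pose proof (Hnn x y Hx Hy).
      apply Rmult_le_pos; [apply Rmult_le_pos; lra|].
      pose proof (Rle_0_sqr (h x + s * h y)). unfold Rsqr in *. lra.
    - unfold D, inner, matvec. rewrite <- !fsum_scal_l, <- !fsum_plus. apply fsum_ext.
      intros x Hx. rewrite <- !fsum_scal_l, <- !fsum_plus. apply fsum_ext. intros. ring. }
  pose proof (Hsq 1). pose proof (Hsq (-1)). split; lra.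
Qed.

Lemma eigenvalue_bounds lam : eigenvalue n P lam -> -1 <= lam <= 1.
Proof.
  intros [v [Hnz Hev]].
  assert (inner v (matvec P v) = lam * inner v v).
  { unfold inner. rewrite <- fsum_scal_l. apply fsum_ext. intros x Hx.
    unfold matvec. rewrite Hev by auto. ring. }
  pose proof (inner_self_pos n pi Hpi v Hnz).
  destruct (substochastic_contraction P v).
  - intros x y Hx Hy. apply Hrev; auto.
  - apply stochastic_nonneg.
  - intros. rewrite stochastic_row; auto. lra.
  - split; nra.
Qed.

Lemma matpow_nonneg k x y : (x < n)%nat -> (y < n)%nat -> 0 <= matpow n P k x y.
Proof.
  revert y. induction k; intros y Hx Hy; simpl.
  - destruct (Nat.eqb x y); lra.
  - apply fsum_nonneg. intros. apply Rmult_le_pos; auto. apply stochastic_nonneg; auto.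
Qed.

Lemma matpow_harmonic k v x : (forall z, (z < n)%nat -> matvec P v z = v z) -> (x < n)%nat ->
  fsum n (fun y => matpow n P k x y * v y) = v x.
Proof.
  intros Hh Hx. induction k; simpl.
  - apply fsum_kron_l; auto.
  - rewrite <- IHk.
    transitivity (fsum n (fun y => fsum n (fun z => matpow n P k x z * P z y * v y))).
    + apply fsum_ext. intros. rewrite <- fsum_scal_r. reflexivity.
    + rewrite fsum_swap. apply fsum_ext. intros z Hz. rewrite <- (Hh z Hz).
      unfold matvec. rewrite <- fsum_scal_l. apply fsum_ext. intros. ring.
Qed.

(* maximum principle: a harmonic function attains its maximum at every state reachable
   from an argmax *)
Lemma harmonic_const v : irreducible n P -> (forall z, (z < n)%nat -> matvec P v z = v z) ->
  exists c, forall y, (y < n)%nat -> v y = c.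
Proof.
  intros Hirr Hh.
  destruct (exists_argmax n v (prob_dist_pos_n n pi Hpid)) as [x0 [Hx0 Hmax]].
  exists (v x0). intros y Hy. destruct (Hirr x0 y Hx0 Hy) as [k Hk].
  assert (Hrow : fsum n (fun z => matpow n P k x0 z * 1) = 1).
  { apply (matpow_harmonic k (fun _ => 1)); auto. intros. unfold matvec.
    rewrite fsum_scal_r, stochastic_row; auto. ring. }
  assert (Hzero : fsum n (fun z => matpow n P k x0 z * (v x0 - v z)) = 0).
  { rewrite (fsum_ext n _ (fun z => v x0 * (matpow n P k x0 z * 1) - matpow n P k x0 z * v z))
      by (intros; ring).
    rewrite fsum_minus, fsum_scal_l, Hrow, matpow_harmonic by auto. ring. }
  assert (Hy0 : matpow n P k x0 y * (v x0 - v y) = 0).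
  { apply (fsum_nonneg_eq0 n (fun z => matpow n P k x0 z * (v x0 - v z))); auto.
    intros z Hz. apply Rmult_le_pos; [apply matpow_nonneg; auto|]. pose proof (Hmax z Hz). lra. }
  apply Rmult_integral in Hy0. destruct Hy0; lra.
Qed.

Lemma harmonic_mean0_eq0 v : irreducible n P ->
  (forall z, (z < n)%nat -> matvec P v z = v z) -> mean v = 0 ->
  forall x, (x < n)%nat -> v x = 0.
Proof.
  intros Hirr Hh H0 x Hx. destruct (harmonic_const v Hirr Hh) as [c Hc].
  assert (mean v = c) as Hm; [|rewrite Hc by auto; lra].
  unfold mean. rewrite (fsum_ext n _ (fun x => c * pi x)) by (intros; rewrite Hc; auto; ring).
  rewrite fsum_scal_l. destruct Hpid as [_ ->]. ring.
Qed.

Variable lam2 : R.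
Hypothesis Hirr : irreducible n P.
Hypothesis Hl2 : is_lambda2 n P lam2.

Lemma lambda2_bounds : -1 <= lam2 < 1.
Proof. destruct Hl2 as [He [Hne _]]. pose proof (eigenvalue_bounds lam2 He). lra. Qed.

Lemma poincare h :
  inner h (matvec P h) <= lam2 * inner h h + (1 - lam2) * (mean h * mean h).
Proof.
  set (k := 1 - lam2).
  set (S := fun x y => P x y - k * pi y).
  assert (HmvS : forall g x, (x < n)%nat -> matvec S g x = matvec P g x - k * mean g).
  { intros g x Hx. unfold matvec, S, mean.
    rewrite (fsum_ext n _ (fun y => P x y * g y - k * (pi y * g y))) by (intros; ring).
    rewrite fsum_minus, fsum_scal_l. reflexivity. }
  assert (HinS : forall g, inner g (matvec S g) = inner g (matvec P g) - k * (mean g * mean g)).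
  { intros g. rewrite (inner_ext n pi g g (matvec S g) (fun x => 1 * matvec P g x + (- k * mean g) * 1))
      by (auto || (intros; rewrite HmvS; auto; ring)).
    rewrite inner_linear_r. replace (inner g (fun _ => 1)) with (mean g); [ring|].
    apply fsum_ext. intros. ring. }
  destruct (Rle_dec (inner h (matvec S h)) (lam2 * inner h h)) as [Hle|Hgt].
  { rewrite HinS in Hle. fold k. lra. }
  exfalso. apply Rnot_le_lt in Hgt.
  assert (HSsa : self_adjoint n pi S).
  { intros x y Hx Hy. unfold S. pose proof (Hrev x y Hx Hy). nra. }
  destruct (eigenvector_above n pi Hpi S lam2 h HSsa Hgt) as [v [th [Hnz [Hth Hev]]]].
  assert (Hm : mean v = 0).
  { assert (mean (matvec S v) = th * mean v).
    { unfold mean. rewrite <- fsum_scal_l. apply fsum_ext. intros. rewrite Hev; auto. ring. }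
    assert (mean (matvec S v) = (1 - k) * mean v).
    { unfold mean at 1. rewrite (fsum_ext n _ (fun x => pi x * matvec P v x - (k * mean v) * pi x))
        by (intros; rewrite HmvS; auto; ring).
      rewrite fsum_minus, fsum_scal_l. fold (mean (matvec P v)). rewrite mean_matvec.
      destruct Hpid as [_ Hs]. change (fsum n (fun x => pi x)) with (fsum n pi). rewrite Hs. ring. }
    assert ((th - lam2) * mean v = 0) by (unfold k in *; lra).
    apply Rmult_integral in H1. destruct H1; lra. }
  assert (HPv : forall x, (x < n)%nat -> matvec P v x = th * v x).
  { intros x Hx. rewrite <- Hev, HmvS, Hm by auto. ring. }
  destruct Hl2 as [_ [_ Hmaxl]].
  destruct (Req_dec th 1) as [->|H1].
  - destruct Hnz as [x [Hx Hvx]]. apply Hvx. apply (harmonic_mean0_eq0 v Hirr); auto.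
    intros. rewrite HPv; auto. ring.
  - assert (th <= lam2) by (apply Hmaxl; auto; exists v; split; auto). lra.
Qed.

End ReversibleChain.

Lemma Un_cv_const c : Un_cv (fun _ => c) c.
Proof. intros e He. exists 0%nat. intros. unfold Rdist. rewrite Rminus_diag, Rabs_R0. auto. Qed.

Lemma infinite_sum_le s l B : infinite_sum s l -> (forall N, sum_f_R0 s N <= B) -> l <= B.
Proof.
  intros Hl HB. apply (Rle_cv_lim (Un := sum_f_R0 s) (Vn := fun _ => B)); auto. apply Un_cv_const.
Qed.

Lemma infinite_sum_epsilon s B : (forall k, 0 <= s k) -> (forall N, sum_f_R0 s N <= B) ->
  infinite_sum s (epsilon (inhabits 0) (fun l => infinite_sum s l)).
Proof.
  intros H HB. apply epsilon_spec.
  destruct (growing_cv (sum_f_R0 s)) as [l Hl].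
  - intros k. simpl. specialize (H (S k)). lra.
  - exists B. intros x [N ->]. auto.
  - exists l. exact Hl.
Qed.

Lemma exp_series x : infinite_sum (fun i => / INR (fact i) * x ^ i) (exp x).
Proof. exact (proj2_sig (exist_exp x)). Qed.

Lemma exp_partial_sum_le x N : 0 <= x -> sum_f_R0 (fun i => / INR (fact i) * x ^ i) N <= exp x.
Proof.
  intros Hx. apply sum_incr; [apply exp_series|]. intros k.
  apply Rmult_le_pos; [left; apply Rinv_0_lt_compat, INR_fact_lt_0 | apply pow_le; auto].
Qed.

Lemma sum_f_R0_mono_N s N M : (forall k, 0 <= s k) -> (N <= M)%nat -> sum_f_R0 s N <= sum_f_R0 s M.
Proof. intros H HNM. induction HNM; [lra|]. simpl. specialize (H (S m)). lra. Qed.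

Lemma sum_f_R0_scal_l c An N : sum_f_R0 (fun i => c * An i) N = c * sum_f_R0 An N.
Proof. rewrite scal_sum. apply sum_eq. intros. ring. Qed.

Lemma sum_f_R0_antidiagonal (g : nat -> nat -> R) J :
  sum_f_R0 (fun j => sum_f_R0 (fun i => g i (j - i)%nat) j) J =
  sum_f_R0 (fun i => sum_f_R0 (fun m => g i m) (J - i)) J.
Proof.
  induction J; [reflexivity|].
  change (sum_f_R0 (fun j => sum_f_R0 (fun i => g i (j - i)%nat) j) (S J)) with
    (sum_f_R0 (fun j => sum_f_R0 (fun i => g i (j - i)%nat) j) J +
     (sum_f_R0 (fun i => g i (S J - i)%nat) J + g (S J) (S J - S J)%nat)).
  change (sum_f_R0 (fun i => sum_f_R0 (fun m => g i m) (S J - i)) (S J)) with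
    (sum_f_R0 (fun i => sum_f_R0 (fun m => g i m) (S J - i)) J +
     sum_f_R0 (fun m => g (S J) m) (S J - S J)).
  rewrite Nat.sub_diag, IHJ.
  rewrite (sum_eq (fun i => sum_f_R0 (fun m => g i m) (S J - i))
                  (fun i => sum_f_R0 (fun m => g i m) (J - i) + g i (S J - i)%nat)).
  - rewrite plus_sum. simpl. ring.
  - intros i Hi. replace (S J - i)%nat with (S (J - i)) by lia. reflexivity.
Qed.

Lemma cauchy_product_le (x y : nat -> R) N M :
  (forall k, 0 <= x k) -> (forall k, 0 <= y k) ->
  sum_f_R0 x N * sum_f_R0 y M <=
  sum_f_R0 (fun j => sum_f_R0 (fun i => x i * y (j - i)%nat) j) (N + M).
Proof.
  intros Hx Hy. rewrite (sum_f_R0_antidiagonal (fun i m => x i * y m)).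
  rewrite Rmult_comm, scal_sum.
  apply Rle_trans with (sum_f_R0 (fun i => sum_f_R0 (fun m => x i * y m) (N + M - i)) N).
  - apply sum_Rle. intros k Hk. rewrite scal_sum.
    rewrite (sum_eq (fun i => y i * x k) (fun m => x k * y m)) by (intros; ring).
    apply sum_f_R0_mono_N; [intros; apply Rmult_le_pos; auto | lia].
  - apply sum_f_R0_mono_N; [|lia]. intros k. apply cond_pos_sum. intros. apply Rmult_le_pos; auto.
Qed.

Lemma C_n_0 j : C j 0 = 1.
Proof. unfold C. rewrite Nat.sub_0_r. simpl. field. apply INR_fact_neq_0. Qed.

Lemma C_n_n j : C j j = 1.
Proof. unfold C. rewrite Nat.sub_diag. simpl. field. apply INR_fact_neq_0. Qed.

Lemma pascal_fsum j (a : nat -> R) :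
  fsum (S j) (fun i => C j i * a i) + fsum (S j) (fun i => C j i * a (S i)) =
  fsum (S (S j)) (fun i => C (S j) i * a i).
Proof.
  rewrite (fsum_Sl (S j)), (fsum_S j (fun i => C (S j) (S i) * a (S i))).
  rewrite (fsum_ext j (fun i => C (S j) (S i) * a (S i))
                      (fun i => C j i * a (S i) + C j (S i) * a (S i))).
  - rewrite fsum_plus, fsum_Sl, fsum_S, !C_n_0, !C_n_n. ring.
  - intros i Hi. rewrite <- pascal by auto. ring.
Qed.

(** * The chain killed on a set *)

Section KilledChain.
Variable n : nat.
Variable P : nat -> nat -> R.
Variable pi : nat -> R.
Hypothesis Hst : stochastic n P.
Hypothesis Hpi : forall x, (x < n)%nat -> 0 < pi x.
Hypothesis Hpid : prob_dist n pi.
Hypothesis Hrev : reversible n P pi.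
Variable A : nat -> bool.

Notation inner := (inner n pi).
Notation matvec := (matvec n).
Notation piA := (measure n pi A).

Definition killed (x y : nat) : R := if A x || A y then 0 else P x y.
Definition indicC (x : nat) : R := if A x then 0 else 1.
Definition killed_pow (k : nat) : nat -> R := Nat.iter k (matvec killed) indicC.
Definition lazy_killed (x y : nat) : R := (kron x y + killed x y) / 2.
Definition lazy_pow (k : nat) : nat -> R := Nat.iter k (matvec lazy_killed) indicC.
Definition vanishes_on_A (h : nat -> R) : Prop :=
  forall y, (y < n)%nat -> A y = true -> h y = 0.

Lemma killed_self_adjoint : self_adjoint n pi killed.
Proof. intros x y Hx Hy. unfold killed. destruct (A x), (A y); simpl; try ring; apply Hrev; auto. Qed.

Lemma killed_nonneg x y : (x < n)%nat -> (y < n)%nat -> 0 <= killed x y.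
Proof. intros. unfold killed. destruct (A x || A y); [lra | apply (stochastic_nonneg n P Hst); auto]. Qed.

Lemma killed_row_le_1 x : (x < n)%nat -> fsum n (fun y => killed x y) <= 1.
Proof.
  intros Hx. rewrite <- (stochastic_row n P Hst x Hx). apply fsum_le. intros y Hy. unfold killed.
  destruct (A x || A y); [apply (stochastic_nonneg n P Hst); auto | lra].
Qed.

Lemma killed_contraction h : - inner h h <= inner h (matvec killed h) <= inner h h.
Proof.
  apply substochastic_contraction; auto.
  - apply killed_self_adjoint.
  - apply killed_nonneg.
  - apply killed_row_le_1.
Qed.

Lemma matvec_killed_on_A h y : A y = true -> matvec killed h y = 0.
Proof. intros Hy. apply fsum_zero_on. intros. unfold killed. rewrite Hy. simpl. ring. Qed.

Lemma killed_pow_on_A k y : A y = true -> killed_pow k y = 0.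
Proof.
  intros Hy. destruct k; [unfold killed_pow, indicC; simpl; rewrite Hy; reflexivity|].
  apply matvec_killed_on_A; auto.
Qed.

Lemma killed_pow_nonneg k y : (y < n)%nat -> 0 <= killed_pow k y.
Proof.
  revert y. induction k; intros y Hy; simpl.
  - unfold indicC. destruct (A y); lra.
  - apply fsum_nonneg. intros. apply Rmult_le_pos; [apply killed_nonneg | apply IHk]; auto.
Qed.

(* by reversibility, the forward survival vector from [pi] is [pi] times the backward one *)
Lemma surv_vec_pi k y : (y < n)%nat -> surv_vec n P pi A k y = pi y * killed_pow k y.
Proof.
  revert y. induction k; intros y Hy; simpl.
  - unfold indicC. destruct (A y); ring.
  - destruct (A y) eqn:Ey.
    + change (Nat.iter k (matvec killed) indicC) with (killed_pow k).
      rewrite matvec_killed_on_A; auto. ring.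
    + unfold matvec. rewrite <- fsum_scal_l. apply fsum_ext. intros x Hx. rewrite IHk; auto.
      unfold killed. rewrite Ey. simpl. destruct (A x) eqn:Ex.
      * rewrite killed_pow_on_A; auto. ring.
      * change (Nat.iter k (matvec killed) indicC) with (killed_pow k).
        rewrite Rmult_assoc, (Rmult_comm (killed_pow k x)), <- Rmult_assoc, Hrev by auto. ring.
Qed.

Lemma surv_mass_pi k : fsum n (surv_vec n P pi A k) = inner indicC (killed_pow k).
Proof.
  apply fsum_ext. intros y Hy. rewrite surv_vec_pi; auto. unfold indicC.
  destruct (A y) eqn:E; [rewrite killed_pow_on_A; auto|]; ring.
Qed.

Lemma matvec_lazy h y : (y < n)%nat -> matvec lazy_killed h y = (h y + matvec killed h y) / 2.
Proof.
  intros Hy. unfold matvec at 1, lazy_killed.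
  rewrite (fsum_ext n _ (fun x => / 2 * (kron y x * h x) + / 2 * (killed y x * h x)))
    by (intros; field).
  rewrite fsum_plus, !fsum_scal_l. fold (matvec kron h y). rewrite matvec_kron; auto.
  unfold matvec. field.
Qed.

Lemma matvec_killed_fsum h (c : nat -> R) m y :
  matvec killed (fun z => fsum m (fun i => c i * h i z)) y =
  fsum m (fun i => c i * matvec killed (h i) y).
Proof.
  unfold matvec. transitivity (fsum n (fun x => fsum m (fun i => c i * (killed y x * h i x)))).
  - apply fsum_ext. intros. rewrite <- fsum_scal_l. apply fsum_ext. intros. ring.
  - rewrite fsum_swap. apply fsum_ext. intros. rewrite <- fsum_scal_l. reflexivity.
Qed.

Lemma lazy_pow_binomial j y : (y < n)%nat ->
  lazy_pow j y = / 2 ^ j * fsum (S j) (fun i => C j i * killed_pow i y).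
Proof.
  revert y. induction j; intros y Hy.
  - unfold fsum. simpl. rewrite C_n_0. field.
  - change (lazy_pow (S j) y) with (matvec lazy_killed (lazy_pow j) y).
    rewrite matvec_lazy, IHj by auto.
    rewrite (matvec_ext n killed (lazy_pow j)
               (fun z => fsum (S j) (fun i => (/ 2 ^ j * C j i) * killed_pow i z)))
      by (intros; rewrite IHj, <- fsum_scal_l by auto; apply fsum_ext; intros; ring).
    rewrite matvec_killed_fsum.
    change (fun i => / 2 ^ j * C j i * matvec killed (killed_pow i) y)
      with (fun i => / 2 ^ j * C j i * killed_pow (S i) y).
    rewrite <- (pascal_fsum j (fun i => killed_pow i y)).
    rewrite (fsum_ext (S j) (fun i => / 2 ^ j * C j i * killed_pow (S i) y)
                            (fun i => / 2 ^ j * (C j i * killed_pow (S i) y))) by (intros; ring).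
    rewrite fsum_scal_l. simpl pow. field. apply pow_nonzero. lra.
Qed.

Lemma inner_lazy_pow_binomial j :
  inner indicC (lazy_pow j) = / 2 ^ j * fsum (S j) (fun i => C j i * inner indicC (killed_pow i)).
Proof.
  rewrite (inner_ext n pi indicC indicC (lazy_pow j)
             (fun y => fsum (S j) (fun i => (/ 2 ^ j * C j i) * killed_pow i y))).
  - rewrite inner_fsum_r, <- fsum_scal_l. apply fsum_ext. intros. ring.
  - auto.
  - intros. rewrite lazy_pow_binomial, <- fsum_scal_l by auto. apply fsum_ext. intros. ring.
Qed.

Lemma lazy_pow_vanishes j : vanishes_on_A (lazy_pow j).
Proof.
  intros y Hy Ay. induction j.
  - unfold lazy_pow, indicC. simpl. rewrite Ay. reflexivity.
  - change (lazy_pow (S j) y) with (matvec lazy_killed (lazy_pow j) y).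
    rewrite matvec_lazy, matvec_killed_on_A, IHj by auto. lra.
Qed.

Lemma inner_indicC_self : inner indicC indicC = 1 - piA.
Proof.
  unfold measure. destruct Hpid as [_ Hs]. rewrite <- Hs, <- fsum_minus.
  apply fsum_ext. intros. unfold indicC. destruct (A x); ring.
Qed.

Lemma measure_bounds : 0 <= piA <= 1.
Proof.
  split.
  - apply fsum_nonneg. intros. destruct (A x); [left; auto | lra].
  - pose proof (inner_self_nonneg n pi Hpi indicC). rewrite inner_indicC_self in H. lra.
Qed.

Variable lam2 : R.
Hypothesis Hirr : irreducible n P.
Hypothesis Hl2 : is_lambda2 n P lam2.

(* Poincare inequality plus Cauchy-Schwarz against the indicator of the complement of A *)
Lemma killed_dirichlet h : vanishes_on_A h ->
  inner h (matvec killed h) <= (1 - piA * (1 - lam2)) * inner h h.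
Proof.
  intros Hv.
  assert (E1 : inner h (matvec killed h) = inner h (matvec P h)).
  { apply fsum_ext. intros y Hy. destruct (A y) eqn:Ay; [rewrite Hv; auto; ring|].
    f_equal. apply fsum_ext. intros x Hx. unfold killed. rewrite Ay. simpl.
    destruct (A x) eqn:Ax; [rewrite Hv; auto; ring | reflexivity]. }
  assert (E2 : mean n pi h = inner indicC h).
  { apply fsum_ext. intros x Hx. unfold indicC. destruct (A x) eqn:Ax; [rewrite Hv; auto|]; ring. }
  pose proof (poincare n P pi Hst Hpi Hpid Hrev lam2 Hirr Hl2 h) as Hp.
  pose proof (cauchy_schwarz n pi Hpi indicC h) as Hcs.
  rewrite inner_indicC_self in Hcs. rewrite E1. rewrite E2 in Hp.
  pose proof (lambda2_bounds n P pi Hst Hpi Hrev lam2 Hl2).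
  assert ((1 - lam2) * (inner indicC h * inner indicC h) <= (1 - lam2) * ((1 - piA) * inner h h))
    by (apply Rmult_le_compat_l; lra).
  nra.
Qed.

End KilledChain.

Section LazyKilledChain.
Variable n : nat.
Variable P : nat -> nat -> R.
Variable pi : nat -> R.
Hypothesis Hst : stochastic n P.
Hypothesis Hpi : forall x, (x < n)%nat -> 0 < pi x.
Hypothesis Hpid : prob_dist n pi.
Hypothesis Hrev : reversible n P pi.
Variable lam2 : R.
Hypothesis Hirr : irreducible n P.
Hypothesis Hl2 : is_lambda2 n P lam2.
Variable A : nat -> bool.

Notation inner := (inner n pi).
Notation matvec := (matvec n).
Notation piA := (measure n pi A).
Notation killed := (killed P A).
Notation lazy_killed := (lazy_killed P A).
Notation lazy_pow := (lazy_pow n P A).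
Notation killed_pow := (killed_pow n P A).
Notation indicC := (indicC A).

Definition lazy_rate : R := 1 - piA * (1 - lam2) / 2.
Definition lazy_mass (j : nat) : R := inner indicC (lazy_pow j).
Definition killed_mass (k : nat) : R := inner indicC (killed_pow k).

Lemma inner_matvec_lazy g h :
  inner g (matvec lazy_killed h) = (inner g h + inner g (matvec killed h)) / 2.
Proof.
  rewrite (inner_ext n pi g g (matvec lazy_killed h) (fun y => / 2 * h y + / 2 * matvec killed h y)).
  - rewrite inner_linear_r. field.
  - auto.
  - intros. rewrite matvec_lazy by auto. field.
Qed.

Lemma lazy_self_adjoint : self_adjoint n pi lazy_killed.
Proof.
  intros x y Hx Hy. unfold lazy_killed.
  pose proof (killed_self_adjoint n P pi Hrev A x y Hx Hy).
  pose proof (kron_self_adjoint n pi x y Hx Hy). lra.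
Qed.

Lemma lazy_psd : positive_semidef n pi lazy_killed.
Proof.
  intros g. rewrite inner_matvec_lazy.
  pose proof (killed_contraction n P pi Hst Hpi Hrev A g). lra.
Qed.

Lemma lazy_dirichlet h : vanishes_on_A n A h -> inner h (matvec lazy_killed h) <= lazy_rate * inner h h.
Proof.
  intros Hv. rewrite inner_matvec_lazy.
  pose proof (killed_dirichlet n P pi Hst Hpi Hpid Hrev A lam2 Hirr Hl2 h Hv).
  unfold lazy_rate. lra.
Qed.

Lemma lazy_rate_nonneg : 0 <= lazy_rate.
Proof.
  pose proof (measure_bounds n pi Hpi Hpid A). pose proof (lambda2_bounds n P pi Hst Hpi Hrev lam2 Hl2).
  unfold lazy_rate. nra.
Qed.

Lemma inner_lazy_pow_shift a b : inner (lazy_pow a) (lazy_pow b) = lazy_mass (a + b).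
Proof.
  revert b. induction a; intros b; [reflexivity|].
  change (lazy_pow (S a)) with (matvec lazy_killed (lazy_pow a)).
  rewrite self_adjoint_inner by apply lazy_self_adjoint.
  change (matvec lazy_killed (lazy_pow b)) with (lazy_pow (S b)). rewrite IHa.
  f_equal. lia.
Qed.

(* even steps are Rayleigh quotients of [lazy_pow i]; odd ones follow by Cauchy-Schwarz,
   using positivity of the lazy chain *)
Lemma lazy_mass_step j : lazy_mass (S j) <= lazy_rate * lazy_mass j.
Proof.
  pose proof lazy_rate_nonneg as Hth.
  destruct (Nat.Even_or_Odd j) as [[i ->]|[i ->]].
  - replace (S (2 * i)) with (i + S i)%nat by lia. replace (2 * i)%nat with (i + i)%nat by lia.
    rewrite <- !inner_lazy_pow_shift. apply lazy_dirichlet, lazy_pow_vanishes.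
  - replace (S (2 * i + 1)) with (S i + S i)%nat by lia.
    replace (2 * i + 1)%nat with (i + S i)%nat by lia.
    rewrite <- !inner_lazy_pow_shift.
    set (X := inner (lazy_pow (S i)) (lazy_pow (S i))).
    set (Y := inner (lazy_pow i) (lazy_pow (S i))).
    pose proof (psd_cauchy_schwarz n pi lazy_killed (lazy_pow i) (lazy_pow (S i))
                  lazy_self_adjoint lazy_psd) as Hcs.
    change (matvec lazy_killed (lazy_pow (S i))) with (lazy_pow (S (S i))) in Hcs.
    change (matvec lazy_killed (lazy_pow i)) with (lazy_pow (S i)) in Hcs.
    replace (inner (lazy_pow i) (lazy_pow (S (S i)))) with X in Hcs
      by (unfold X; rewrite !inner_lazy_pow_shift; f_equal; lia).
    fold X Y in Hcs.
    assert (HX : inner (lazy_pow (S i)) (lazy_pow (S (S i))) <= lazy_rate * X)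
      by (apply lazy_dirichlet, lazy_pow_vanishes).
    assert (HX0 : 0 <= X) by (apply inner_self_nonneg; auto).
    assert (HY0 : 0 <= Y) by apply lazy_psd.
    destruct HX0 as [HX0|HX0]; [|rewrite <- HX0; apply Rmult_le_pos; auto].
    apply (Rmult_le_reg_r X); auto. nra.
Qed.

Lemma lazy_mass_geometric j : lazy_mass j <= lazy_rate ^ j * (1 - piA).
Proof.
  induction j.
  - unfold lazy_mass. simpl. rewrite inner_indicC_self by auto. lra.
  - pose proof (lazy_mass_step j). pose proof lazy_rate_nonneg. simpl.
    assert (lazy_rate * lazy_mass j <= lazy_rate * (lazy_rate ^ j * (1 - piA)))
      by (apply Rmult_le_compat_l; auto). lra.
Qed.

Lemma killed_mass_nonneg k : 0 <= killed_mass k.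
Proof.
  apply fsum_nonneg. intros. apply Rmult_le_pos; [apply Rmult_le_pos|].
  - left; auto.
  - unfold indicC. destruct (A x); lra.
  - apply killed_pow_nonneg; auto.
Qed.

(* the rate-1 killed chain is the rate-2 lazy killed chain: [e^{sK} = e^{-s} e^{2sL}] *)
Lemma poisson_convolution_lazy s j :
  sum_f_R0 (fun i => (/ INR (fact i) * s ^ i * killed_mass i) * (/ INR (fact (j - i)) * s ^ (j - i))) j
  = / INR (fact j) * (2 * s) ^ j * lazy_mass j.
Proof.
  unfold lazy_mass. rewrite inner_lazy_pow_binomial, <- fsum_sum_f_R0, Rpow_mult_distr by auto.
  replace (/ INR (fact j) * (2 ^ j * s ^ j) * (/ 2 ^ j * fsum (S j) (fun i => C j i * inner indicC (killed_pow i))))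
    with (/ INR (fact j) * s ^ j * fsum (S j) (fun i => C j i * killed_mass i))
    by (unfold killed_mass; field; split; [apply pow_nonzero; lra | apply INR_fact_neq_0]).
  rewrite <- fsum_scal_l. apply fsum_ext. intros i Hi. unfold C.
  replace (s ^ j) with (s ^ i * s ^ (j - i)) by (rewrite <- pow_add; f_equal; lia).
  field. repeat split; apply INR_fact_neq_0.
Qed.

Lemma killed_series_product_le s N M : 0 <= s ->
  sum_f_R0 (fun k => / INR (fact k) * s ^ k * killed_mass k) N *
  sum_f_R0 (fun m => / INR (fact m) * s ^ m) M <= (1 - piA) * exp (2 * s * lazy_rate).
Proof.
  intros Hs. pose proof (measure_bounds n pi Hpi Hpid A). pose proof lazy_rate_nonneg.
  assert (Hc : forall x k, 0 <= x -> 0 <= / INR (fact k) * x ^ k)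
    by (intros; apply Rmult_le_pos; [left; apply Rinv_0_lt_compat, INR_fact_lt_0 | apply pow_le; auto]).
  eapply Rle_trans; [apply cauchy_product_le|].
  - intros k. apply Rmult_le_pos; [apply Hc; auto | apply killed_mass_nonneg].
  - intros k. apply Hc; auto.
  - rewrite (sum_eq _ (fun j => / INR (fact j) * (2 * s) ^ j * lazy_mass j))
      by (intros; apply poisson_convolution_lazy).
    apply Rle_trans with
      (sum_f_R0 (fun j => (/ INR (fact j) * (2 * s * lazy_rate) ^ j) * (1 - piA)) (N + M)).
    + apply sum_Rle. intros k _. rewrite (Rpow_mult_distr (2 * s) lazy_rate k).
      pose proof (lazy_mass_geometric k). assert (0 <= 2 * s) by lra.
      replace (/ INR (fact k) * ((2 * s) ^ k * lazy_rate ^ k) * (1 - piA))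
        with ((/ INR (fact k) * (2 * s) ^ k) * (lazy_rate ^ k * (1 - piA))) by ring.
      apply Rmult_le_compat_l; auto.
    + rewrite <- scal_sum. apply Rmult_le_compat_l; [lra|].
      apply exp_partial_sum_le. apply Rmult_le_pos; lra.
Qed.

Lemma tail_pi_partial s N : 0 <= s ->
  sum_f_R0 (surv_term n P pi A s) N <= (1 - piA) * exp (- (s * (piA * (1 - lam2)))).
Proof.
  intros Hs.
  set (XN := sum_f_R0 (fun k => / INR (fact k) * s ^ k * killed_mass k) N).
  assert (Hsum : sum_f_R0 (surv_term n P pi A s) N = XN * exp (- s)).
  { unfold XN. rewrite Rmult_comm, scal_sum. apply sum_eq. intros k _. unfold surv_term.
    rewrite surv_mass_pi by auto. unfold killed_mass, Rdiv. ring. }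
  assert (HXe : XN * exp s <= (1 - piA) * exp (2 * s * lazy_rate)).
  { apply (Rle_cv_lim (Un := fun M => XN * sum_f_R0 (fun m => / INR (fact m) * s ^ m) M)
                      (Vn := fun _ => (1 - piA) * exp (2 * s * lazy_rate))).
    - intros M. apply killed_series_product_le; auto.
    - apply CV_mult; [apply Un_cv_const | apply exp_series].
    - apply Un_cv_const. }
  rewrite Hsum.
  replace (exp (- (s * (piA * (1 - lam2))))) with (exp (2 * s * lazy_rate) * exp (- s) * exp (- s))
    by (rewrite <- !exp_plus; f_equal; unfold lazy_rate; field).
  assert (Hinv : exp s * exp (- s) = 1) by (rewrite <- exp_plus, Rplus_opp_r; apply exp_0).
  replace (XN * exp (- s)) with (XN * exp s * (exp (- s) * exp (- s)))
    by (transitivity (XN * exp (- s) * (exp s * exp (- s))); [ring | rewrite Hinv; ring]).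
  pose proof (exp_pos (- s)).
  replace ((1 - piA) * (exp (2 * s * lazy_rate) * exp (- s) * exp (- s)))
    with ((1 - piA) * exp (2 * s * lazy_rate) * (exp (- s) * exp (- s))) by ring.
  apply Rmult_le_compat_r; nra.
Qed.

End LazyKilledChain.

(** * Survival probabilities and the strong Markov property *)

Definition poisson (t : R) (k : nat) : R := exp (- t) * t ^ k / INR (fact k).

Lemma poisson_nonneg t k : 0 <= t -> 0 <= poisson t k.
Proof.
  intros. unfold poisson, Rdiv. apply Rmult_le_pos; [apply Rmult_le_pos|].
  - left; apply exp_pos.
  - apply pow_le; auto.
  - left. apply Rinv_0_lt_compat, INR_fact_lt_0.
Qed.

Lemma poisson_partial_sum_le_1 t N : 0 <= t -> sum_f_R0 (poisson t) N <= 1.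
Proof.
  intros Ht. rewrite (sum_eq _ (fun k => (/ INR (fact k) * t ^ k) * exp (- t)))
    by (intros; unfold poisson, Rdiv; ring).
  rewrite <- scal_sum, Rmult_comm.
  apply Rle_trans with (exp t * exp (- t)).
  - apply Rmult_le_compat_r; [left; apply exp_pos | apply exp_partial_sum_le; auto].
  - rewrite <- exp_plus, Rplus_opp_r, exp_0. lra.
Qed.

Lemma poisson_add t s k : poisson (t + s) k = sum_f_R0 (fun a => poisson t a * poisson s (k - a)) k.
Proof.
  unfold poisson. rewrite binomial, Ropp_plus_distr, exp_plus.
  replace (exp (- t) * exp (- s) * sum_f_R0 (fun i => C k i * t ^ i * s ^ (k - i)) k / INR (fact k))
    with ((exp (- t) * exp (- s) / INR (fact k)) * sum_f_R0 (fun i => C k i * t ^ i * s ^ (k - i)) k)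
    by (unfold Rdiv; ring).
  rewrite scal_sum. apply sum_eq. intros i Hi. unfold C. field.
  repeat split; apply INR_fact_neq_0.
Qed.

Lemma infinite_sum_scal_l s l c : infinite_sum s l -> infinite_sum (fun k => c * s k) (c * l).
Proof.
  intros H e He.
  destruct (CV_mult (fun _ => c) (sum_f_R0 s) c l (Un_cv_const c) H e He) as [N HN].
  exists N. intros m Hm. rewrite sum_f_R0_scal_l. apply HN; auto.
Qed.

Lemma infinite_sum_fsum m (F : nat -> nat -> R) (l : nat -> R) :
  (forall x, (x < m)%nat -> infinite_sum (F x) (l x)) ->
  infinite_sum (fun k => fsum m (fun x => F x k)) (fsum m l).
Proof.
  induction m; intros H e He.
  - exists 0%nat. intros N _. unfold Rdist.
    rewrite (sum_eq _ (fun _ => 0)), sum_cte by reflexivity.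
    unfold fsum. simpl. rewrite Rmult_0_l, Rminus_0_r, Rabs_R0. auto.
  - assert (Hc : Un_cv (fun N => sum_f_R0 (fun k => fsum m (fun x => F x k)) N + sum_f_R0 (F m) N)
                       (fsum m l + l m))
      by (apply CV_plus; [apply IHm; intros; apply H; lia | apply H; lia]).
    destruct (Hc e He) as [N HN]. exists N. intros k Hk.
    rewrite fsum_S, (sum_eq _ (fun i => fsum m (fun x => F x i) + F m i))
      by (intros; rewrite fsum_S; reflexivity).
    rewrite plus_sum. apply HN; auto.
Qed.

Lemma sum_f_R0_fsum_swap m N (F : nat -> nat -> R) :
  sum_f_R0 (fun k => fsum m (fun x => F k x)) N = fsum m (fun x => sum_f_R0 (fun k => F k x) N).
Proof. induction N; [reflexivity|]. simpl. rewrite IHN, <- fsum_plus. reflexivity. Qed.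

Section Survival.
Variable n : nat.
Variable P : nat -> nat -> R.
Hypothesis Hst : stochastic n P.

Notation sv := (surv_vec n P).

Definition surv_mass (nu : nat -> R) (B : nat -> bool) (k : nat) : R := fsum n (sv nu B k).
Definition nonneg_vec (nu : nat -> R) : Prop := forall y, (y < n)%nat -> 0 <= nu y.

Lemma kron_nonneg_vec x : nonneg_vec (kron x).
Proof. intros y _. apply kron_nonneg. Qed.

Lemma surv_vec_linear a nu1 b nu2 B k y :
  sv (fun z => a * nu1 z + b * nu2 z) B k y = a * sv nu1 B k y + b * sv nu2 B k y.
Proof.
  revert y. induction k; intros y; simpl; destruct (B y); try ring.
  rewrite <- !fsum_scal_l, <- fsum_plus. apply fsum_ext. intros. rewrite IHk. ring.
Qed.

Lemma surv_vec_restrict nu1 nu2 B k y :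
  (forall z, (z < n)%nat -> B z = false -> nu1 z = nu2 z) -> (y < n)%nat ->
  sv nu1 B k y = sv nu2 B k y.
Proof.
  intros H. revert y. induction k; intros y Hy; simpl; destruct (B y) eqn:E; auto.
  apply fsum_ext. intros. rewrite IHk; auto.
Qed.

Lemma surv_vec_nonneg nu B k y : nonneg_vec nu -> (y < n)%nat -> 0 <= sv nu B k y.
Proof.
  intros H. revert y. induction k; intros y Hy; simpl; destruct (B y); try lra; auto.
  apply fsum_nonneg. intros. apply Rmult_le_pos; auto. apply (stochastic_nonneg n P Hst); auto.
Qed.

Lemma surv_vec_succ nu B k y : sv nu B (S k) y = sv (sv nu B 1) B k y.
Proof.
  revert y. induction k; intros y; [simpl; destruct (B y); reflexivity|].
  change (sv nu B (S (S k)) y) with (if B y then 0 else fsum n (fun x => sv nu B (S k) x * P x y)).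
  change (sv (sv nu B 1) B (S k) y) with
    (if B y then 0 else fsum n (fun x => sv (sv nu B 1) B k x * P x y)).
  destruct (B y); [reflexivity|]. apply fsum_ext. intros. rewrite IHk. reflexivity.
Qed.

Lemma surv_mass_succ_le nu B k : nonneg_vec nu -> surv_mass nu B (S k) <= surv_mass nu B k.
Proof.
  intros H. unfold surv_mass. simpl.
  apply Rle_trans with (fsum n (fun y => fsum n (fun x => sv nu B k x * P x y))).
  - apply fsum_le. intros y Hy. destruct (B y); [|lra].
    apply fsum_nonneg. intros. apply Rmult_le_pos; [apply surv_vec_nonneg; auto|].
    apply (stochastic_nonneg n P Hst); auto.
  - rewrite fsum_swap. apply fsum_le. intros x Hx. rewrite fsum_scal_l, stochastic_row by auto. lra.
Qed.

Lemma surv_mass_antitone nu B k j : nonneg_vec nu -> surv_mass nu B (k + j) <= surv_mass nu B k.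
Proof.
  intros H. induction j; [rewrite Nat.add_0_r; lra|].
  replace (k + S j)%nat with (S (k + j)) by lia. pose proof (surv_mass_succ_le nu B (k + j) H). lra.
Qed.

Lemma surv_mass_le_mass nu B k : nonneg_vec nu -> surv_mass nu B k <= fsum n nu.
Proof.
  intros H. replace k with (0 + k)%nat by lia. eapply Rle_trans; [apply surv_mass_antitone; auto|].
  apply fsum_le. intros x Hx. simpl. destruct (B x); [apply H; auto | lra].
Qed.

Lemma surv_mass_nonneg nu B k : nonneg_vec nu -> 0 <= surv_mass nu B k.
Proof. intros. apply fsum_nonneg. intros. apply surv_vec_nonneg; auto. Qed.

Lemma surv_vec_decompose nu B k y : (y < n)%nat ->
  sv nu B k y = fsum n (fun x => nu x * sv (kron x) B k y).
Proof.
  revert y. induction k; intros y Hy; simpl; destruct (B y);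
    try (symmetry; apply fsum_zero_on; intros; ring).
  - symmetry. apply fsum_kron_r; auto.
  - transitivity (fsum n (fun z => fsum n (fun x => nu x * (sv (kron x) B k z * P z y)))).
    + apply fsum_ext. intros z Hz. rewrite IHk, <- fsum_scal_r by auto. apply fsum_ext. intros. ring.
    + rewrite fsum_swap. apply fsum_ext. intros. rewrite fsum_scal_l. reflexivity.
Qed.

Lemma surv_mass_decompose nu B k :
  surv_mass nu B k = fsum n (fun x => nu x * surv_mass (kron x) B k).
Proof.
  unfold surv_mass. transitivity (fsum n (fun y => fsum n (fun x => nu x * sv (kron x) B k y))).
  - apply fsum_ext. intros. apply surv_vec_decompose; auto.
  - rewrite fsum_swap. apply fsum_ext. intros. rewrite fsum_scal_l. reflexivity.
Qed.

Lemma surv_term_poisson nu B t k : surv_term n P nu B t k = poisson t k * surv_mass nu B k.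
Proof. reflexivity. Qed.

Lemma poisson_sum_surv_mass_le nu B t j N : nonneg_vec nu -> 0 <= t ->
  sum_f_R0 (fun b => poisson t b * surv_mass nu B (j + b)) N <= fsum n nu.
Proof.
  intros H Ht. apply Rle_trans with (sum_f_R0 (fun b => fsum n nu * poisson t b) N).
  - apply sum_Rle. intros. rewrite Rmult_comm.
    apply Rmult_le_compat_r; [apply poisson_nonneg | apply surv_mass_le_mass]; auto.
  - rewrite sum_f_R0_scal_l. pose proof (poisson_partial_sum_le_1 t N Ht).
    assert (0 <= fsum n nu) by (apply fsum_nonneg; auto). nra.
Qed.

Lemma tail_prob_spec nu B t : nonneg_vec nu -> 0 <= t ->
  infinite_sum (surv_term n P nu B t) (tail_prob n P nu B t).
Proof.
  intros H Ht. apply (infinite_sum_epsilon _ (fsum n nu)).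
  - intros k. rewrite surv_term_poisson.
    apply Rmult_le_pos; [apply poisson_nonneg | apply surv_mass_nonneg]; auto.
  - intros N. apply (poisson_sum_surv_mass_le nu B t 0 N); auto.
Qed.

Lemma partial_sum_le_tail_prob nu B t N : nonneg_vec nu -> 0 <= t ->
  sum_f_R0 (surv_term n P nu B t) N <= tail_prob n P nu B t.
Proof.
  intros H Ht. apply sum_incr; [apply tail_prob_spec; auto|]. intros. rewrite surv_term_poisson.
  apply Rmult_le_pos; [apply poisson_nonneg | apply surv_mass_nonneg]; auto.
Qed.

Lemma tail_prob_nonneg nu B t : nonneg_vec nu -> 0 <= t -> 0 <= tail_prob n P nu B t.
Proof.
  intros H Ht. eapply Rle_trans; [|apply (partial_sum_le_tail_prob nu B t 0); auto].
  simpl. rewrite surv_term_poisson.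
  apply Rmult_le_pos; [apply poisson_nonneg | apply surv_mass_nonneg]; auto.
Qed.

Lemma tail_prob_decompose nu B t : nonneg_vec nu -> 0 <= t ->
  tail_prob n P nu B t = fsum n (fun x => nu x * tail_prob n P (kron x) B t).
Proof.
  intros H Ht. apply (uniqueness_sum (surv_term n P nu B t)); [apply tail_prob_spec; auto|].
  intros e He.
  destruct (infinite_sum_fsum n (fun x k => nu x * surv_term n P (kron x) B t k)
              (fun x => nu x * tail_prob n P (kron x) B t)) with (eps := e) as [N HN]; auto.
  { intros. apply infinite_sum_scal_l, tail_prob_spec; auto. apply kron_nonneg_vec. }
  exists N. intros k Hk. rewrite (sum_eq _ (fun i => fsum n (fun x => nu x * surv_term n P (kron x) B t i))).
  - apply HN; auto.
  - intros i _. rewrite !surv_term_poisson, surv_mass_decompose, <- fsum_scal_l.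
    apply fsum_ext. intros. rewrite surv_term_poisson. ring.
Qed.

Section StrongMarkov.
Variables (A G : nat -> bool) (s eps : R).
Hypothesis Hs : 0 <= s.
Hypothesis Heps : 0 <= eps.
Hypothesis HAG : forall y, A y = true -> G y = true.
Hypothesis HG : forall x, (x < n)%nat -> G x = true -> tail_prob n P (kron x) A s <= eps.

Definition restrict_in (nu : nat -> R) : nat -> R := fun y => if G y then nu y else 0.
Definition restrict_out (nu : nat -> R) : nat -> R := fun y => if G y then 0 else nu y.

Lemma restrict_in_nonneg nu : nonneg_vec nu -> nonneg_vec (restrict_in nu).
Proof. intros H y Hy. unfold restrict_in. destruct (G y); auto; lra. Qed.

Lemma restrict_out_nonneg nu : nonneg_vec nu -> nonneg_vec (restrict_out nu).
Proof. intros H y Hy. unfold restrict_out. destruct (G y); auto; lra. Qed.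

Lemma mass_restrict_split nu : fsum n nu = fsum n (restrict_in nu) + fsum n (restrict_out nu).
Proof. rewrite <- fsum_plus. apply fsum_ext. intros. unfold restrict_in, restrict_out. destruct (G x); ring. Qed.

Lemma surv_mass_restrict_split nu k :
  surv_mass nu A k = surv_mass (restrict_in nu) A k + surv_mass (restrict_out nu) A k.
Proof.
  unfold surv_mass. rewrite <- fsum_plus. apply fsum_ext. intros y Hy.
  rewrite (surv_vec_restrict nu (fun z => 1 * restrict_in nu z + 1 * restrict_out nu z))
    by (auto; intros; unfold restrict_in, restrict_out; destruct (G z); ring).
  rewrite surv_vec_linear. ring.
Qed.

Lemma restrict_in_poisson_le nu N : nonneg_vec nu ->
  sum_f_R0 (fun b => poisson s b * surv_mass (restrict_in nu) A b) N <= eps * fsum n (restrict_in nu).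
Proof.
  intros H.
  rewrite (sum_eq _ (fun b => fsum n (fun x => restrict_in nu x * (poisson s b * surv_mass (kron x) A b))))
    by (intros; rewrite surv_mass_decompose, <- fsum_scal_l; apply fsum_ext; intros; ring).
  rewrite sum_f_R0_fsum_swap, <- fsum_scal_l. apply fsum_le. intros x Hx.
  unfold restrict_in. destruct (G x) eqn:Gx.
  - rewrite sum_f_R0_scal_l. pose proof (H x Hx).
    assert (sum_f_R0 (fun b => poisson s b * surv_mass (kron x) A b) N <= tail_prob n P (kron x) A s)
      by exact (partial_sum_le_tail_prob (kron x) A s N (kron_nonneg_vec x) Hs).
    pose proof (HG x Hx Gx). nra.
  - rewrite sum_f_R0_scal_l. lra.
Qed.

(* one step from outside [G] never enters [A], so killing on [A] or [G] agrees there *)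
Lemma surv_mass_restrict_out_step nu a :
  surv_mass (sv (restrict_out nu) A 1) G a = surv_mass nu G (S a).
Proof.
  apply fsum_ext. intros y Hy. rewrite surv_vec_succ. apply surv_vec_restrict; auto.
  intros z Hz Gz. simpl. rewrite Gz.
  assert (A z = false) as -> by (destruct (A z) eqn:E; auto; apply HAG in E; congruence).
  apply fsum_ext. intros x Hx. unfold restrict_out.
  destruct (A x) eqn:Ax; [rewrite (HAG x Ax)|]; reflexivity.
Qed.

Lemma strong_markov_poisson a : forall nu N, nonneg_vec nu ->
  sum_f_R0 (fun b => poisson s b * surv_mass nu A (a + b)) N <= surv_mass nu G a + eps * fsum n nu.
Proof.
  induction a as [|a IHa]; intros nu N H;
    pose proof (restrict_in_poisson_le nu N H) as Hin; rewrite (mass_restrict_split nu);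
    assert (0 <= fsum n (restrict_in nu)) by (apply fsum_nonneg, restrict_in_nonneg; auto);
    assert (0 <= fsum n (restrict_out nu)) by (apply fsum_nonneg, restrict_out_nonneg; auto).
  - rewrite (sum_eq _ (fun b => poisson s b * surv_mass (restrict_in nu) A b
                              + poisson s b * surv_mass (restrict_out nu) A (0 + b)))
      by (intros i _; change (0 + i)%nat with i; rewrite surv_mass_restrict_split; ring).
    rewrite plus_sum.
    pose proof (poisson_sum_surv_mass_le (restrict_out nu) A s 0 N (restrict_out_nonneg nu H) Hs).
    change (surv_mass nu G 0) with (fsum n (restrict_out nu)). nra.
  - set (nu2 := sv (restrict_out nu) A 1).
    assert (Hnu2 : nonneg_vec nu2)
      by (intros y Hy; apply surv_vec_nonneg; auto; apply restrict_out_nonneg; auto).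
    apply Rle_trans with (sum_f_R0 (fun b => poisson s b * surv_mass (restrict_in nu) A b) N +
                          sum_f_R0 (fun b => poisson s b * surv_mass nu2 A (a + b)) N).
    + rewrite <- plus_sum. apply sum_Rle. intros b _.
      rewrite surv_mass_restrict_split, Rmult_plus_distr_l. apply Rplus_le_compat.
      * apply Rmult_le_compat_l; [apply poisson_nonneg; auto|].
        replace (S a + b)%nat with (b + S a)%nat by lia.
        apply surv_mass_antitone, restrict_in_nonneg; auto.
      * right. f_equal. apply fsum_ext. intros. apply surv_vec_succ.
    + assert (fsum n nu2 <= fsum n (restrict_out nu))
        by (apply (surv_mass_le_mass _ A 1), restrict_out_nonneg; auto).
      pose proof (IHa nu2 N Hnu2) as Hrec. unfold nu2 in *.
      rewrite surv_mass_restrict_out_step in Hrec. nra.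
Qed.

End StrongMarkov.

Lemma tail_composite A G s eps mu t : 0 <= s -> 0 <= eps ->
  (forall y, A y = true -> G y = true) ->
  (forall x, (x < n)%nat -> G x = true -> tail_prob n P (kron x) A s <= eps) ->
  nonneg_vec mu -> fsum n mu = 1 -> 0 <= t ->
  tail_prob n P mu A (t + s) <= tail_prob n P mu G t + eps.
Proof.
  intros Hs Heps HAG HG Hmu Hm1 Ht.
  apply (infinite_sum_le (surv_term n P mu A (t + s))); [apply tail_prob_spec; auto; lra|].
  intros N.
  set (g := fun a b => poisson t a * poisson s b * surv_mass mu A (a + b)).
  replace (sum_f_R0 (surv_term n P mu A (t + s)) N)
    with (sum_f_R0 (fun k => sum_f_R0 (fun a => g a (k - a)%nat) k) N).
  2:{ apply sum_eq. intros k _. rewrite surv_term_poisson, poisson_add, Rmult_comm, scal_sum.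
      apply sum_eq. intros a Ha. unfold g. replace (a + (k - a))%nat with k by lia. ring. }
  rewrite sum_f_R0_antidiagonal.
  apply Rle_trans with (sum_f_R0 (fun a => poisson t a * (surv_mass mu G a + eps)) N).
  - apply sum_Rle. intros a _.
    rewrite (sum_eq _ (fun b => poisson t a * (poisson s b * surv_mass mu A (a + b))))
      by (intros; unfold g; ring).
    rewrite sum_f_R0_scal_l. apply Rmult_le_compat_l; [apply poisson_nonneg; auto|].
    pose proof (strong_markov_poisson A G s eps Hs Heps HAG HG a mu (N - a) Hmu) as H.
    rewrite Hm1 in H. lra.
  - rewrite (sum_eq _ (fun a => surv_term n P mu G t a + eps * poisson t a))
      by (intros; rewrite surv_term_poisson; ring).
    rewrite plus_sum, sum_f_R0_scal_l. apply Rplus_le_compat.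
    + apply partial_sum_le_tail_prob; auto.
    + pose proof (poisson_partial_sum_le_1 t N Ht). nra.
Qed.

End Survival.

(** * Hitting times *)

Lemma exp_le_compat x y : x <= y -> exp x <= exp y.
Proof. intros [H|H]; [left; apply exp_increasing; auto | subst; lra]. Qed.

Lemma hit_is_glb n P pi mu d q : (exists t, hit_set n P pi mu d q t) ->
  is_glb (hit_set n P pi mu d q) (hit n P pi mu d q).
Proof.
  intros Hne. unfold hit. apply epsilon_spec. apply (glb_exists _ 0); auto. intros x [Hx _]. auto.
Qed.

Lemma surv_vec_zero n P B k y : (y < n)%nat -> surv_vec n P (fun _ => 0) B k y = 0.
Proof.
  revert y. induction k; intros y Hy; simpl; destruct (B y); auto.
  apply fsum_zero_on. intros. rewrite IHk; auto. ring.
Qed.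

Lemma tail_prob_start_in n P B y s : stochastic n P -> B y = true -> 0 <= s ->
  tail_prob n P (kron y) B s <= 0.
Proof.
  intros Hst Hy Hs. apply (infinite_sum_le (surv_term n P (kron y) B s)).
  - apply tail_prob_spec; auto. apply kron_nonneg_vec.
  - intros N. rewrite (sum_eq _ (fun _ => 0)), sum_cte; [lra|]. intros k _.
    rewrite surv_term_poisson. unfold surv_mass. rewrite fsum_zero_on; [ring|].
    intros z Hz. rewrite (surv_vec_restrict n P (kron y) (fun _ => 0)); auto.
    + apply surv_vec_zero; auto.
    + intros w Hw Bw. unfold kron. destruct (Nat.eqb_spec y w); [subst; congruence | reflexivity].
Qed.

Lemma tail_prob_monotone_start n P mu nu B t c : stochastic n P ->
  nonneg_vec n nu -> 0 <= t -> (forall x, (x < n)%nat -> mu x <= c * nu x) -> nonneg_vec n mu ->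
  tail_prob n P mu B t <= c * tail_prob n P nu B t.
Proof.
  intros Hst Hnu Ht Hle Hmu. rewrite !(tail_prob_decompose n P Hst _ B t) by auto.
  rewrite <- fsum_scal_l. apply fsum_le. intros x Hx.
  pose proof (tail_prob_nonneg n P Hst (kron x) B t (kron_nonneg_vec n x) Ht).
  pose proof (Hle x Hx). nra.
Qed.

Lemma hit_set_threshold_mono n P pi mu b g q t :
  b <= g -> hit_set n P pi mu b q t -> hit_set n P pi mu g q t.
Proof. intros Hbg [Ht HB]. split; auto. intros B HmB. apply HB. lra. Qed.

Lemma prob_dist_le_scaled n pi mu : prob_dist n mu -> (forall x, (x < n)%nat -> 0 < pi x) ->
  0 < fsum n (fun x => / pi x) /\ forall x, (x < n)%nat -> mu x <= fsum n (fun x => / pi x) * pi x.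
Proof.
  intros Hmu Hpi.
  assert (Hinv : forall x, (x < n)%nat -> 0 <= / pi x) by (intros; left; apply Rinv_0_lt_compat; auto).
  split.
  - pose proof (prob_dist_pos_n n mu Hmu). destruct n as [|m]; [lia|]. rewrite fsum_S.
    assert (0 <= fsum m (fun x => / pi x)) by (apply fsum_nonneg; intros; apply Hinv; lia).
    assert (0 < / pi m) by (apply Rinv_0_lt_compat, Hpi; lia). lra.
  - intros x Hx. assert (mu x <= 1).
    { destruct Hmu as [Hm1 Hm2]. rewrite <- Hm2. apply fsum_term_le; auto. }
    assert (/ pi x <= fsum n (fun x => / pi x)) by (apply (fsum_term_le n (fun x => / pi x)); auto).
    pose proof (Hpi x Hx). assert (/ pi x * pi x = 1) by (field; lra). nra.
Qed.

Section Hitting.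
Variable n : nat.
Variable P : nat -> nat -> R.
Variable pi mu : nat -> R.
Variable lam2 : R.
Hypothesis Hst : stochastic n P.
Hypothesis Hirr : irreducible n P.
Hypothesis Hpid : prob_dist n pi.
Hypothesis Hpi : forall x, (x < n)%nat -> 0 < pi x.
Hypothesis Hrev : reversible n P pi.
Hypothesis Hmu : prob_dist n mu.
Hypothesis Hl2 : is_lambda2 n P lam2.

Lemma pi_nonneg_vec : nonneg_vec n pi.
Proof. intros y Hy. left. auto. Qed.

Lemma mu_nonneg_vec : nonneg_vec n mu.
Proof. intros y Hy. destruct Hmu. auto. Qed.

Lemma tail_pi_bound A s b : 0 <= s -> b <= measure n pi A ->
  tail_prob n P pi A s <= (1 - b) * exp (- (s * (b * (1 - lam2)))).
Proof.
  intros Hs Hb. pose proof (lambda2_bounds n P pi Hst Hpi Hrev lam2 Hl2).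
  pose proof (measure_bounds n pi Hpi Hpid A).
  apply Rle_trans with ((1 - measure n pi A) * exp (- (s * (measure n pi A * (1 - lam2))))).
  - apply (infinite_sum_le (surv_term n P pi A s)).
    + apply (tail_prob_spec n P Hst); [apply pi_nonneg_vec | auto].
    + intros N. apply tail_pi_partial; auto.
  - apply Rmult_le_compat; [lra | left; apply exp_pos | lra|].
    apply exp_le_compat.
    assert (0 <= s * ((measure n pi A - b) * (1 - lam2))) by (apply Rmult_le_pos; [|apply Rmult_le_pos]; lra).
    nra.
Qed.

Lemma hit_set_nonempty g q : 0 < g -> 0 < q -> exists t, hit_set n P pi mu g q t.
Proof.
  intros Hg Hq.
  destruct (prob_dist_le_scaled n pi mu Hmu Hpi) as [Hc Hmuc].
  set (c := fsum n (fun x => / pi x)) in *.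
  set (gap := 1 - lam2).
  assert (Hgap : 0 < gap) by (unfold gap; pose proof (lambda2_bounds n P pi Hst Hpi Hrev lam2 Hl2); lra).
  set (t := Rmax 0 (ln (c / q) / (g * gap))).
  assert (Ht : 0 <= t) by apply Rmax_l.
  exists t. split; [exact Ht|]. intros B HB.
  eapply Rle_trans; [apply (tail_prob_monotone_start n P mu pi B t c); auto;
                     [apply pi_nonneg_vec | apply mu_nonneg_vec]|].
  pose proof (tail_pi_bound B t g Ht HB) as Hb. fold gap in Hb.
  assert (Hexp : exp (- (t * (g * gap))) <= q / c).
  { assert (ln (c / q) <= t * (g * gap)).
    { assert (ln (c / q) / (g * gap) <= t) by apply Rmax_r.
      assert (0 < g * gap) by (apply Rmult_lt_0_compat; auto).
      apply (Rmult_le_compat_r (g * gap)) in H; [|lra].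
      unfold Rdiv in H. rewrite Rmult_assoc, Rinv_l in H by lra. lra. }
    replace (q / c) with (exp (- ln (c / q))).
    - apply exp_le_compat. lra.
    - rewrite exp_Ropp, exp_ln; [field; lra|]. apply Rdiv_lt_0_compat; auto. }
  pose proof (exp_pos (- (t * (g * gap)))).
  assert (tail_prob n P pi B t <= q / c) by nra.
  apply (Rmult_le_compat_l c) in H0; [|lra].
  replace (c * (q / c)) with q in H0 by (field; lra). lra.
Qed.

Definition good_set (A : nat -> bool) (s eps : R) (x : nat) : bool :=
  if Rle_dec (tail_prob n P (kron x) A s) eps then true else false.

(* Markov's inequality in the stationary start: [eps pi(G^c) <= P_pi[T_A > s]] *)
Lemma good_set_measure A s eps b : 0 < eps -> 0 <= s -> b <= measure n pi A ->
  1 - (1 - b) * exp (- (s * (b * (1 - lam2)))) / eps <= measure n pi (good_set A s eps).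
Proof.
  intros He Hs HA.
  set (Dc := fsum n (fun x => if good_set A s eps x then 0 else pi x)).
  assert (Hm : measure n pi (good_set A s eps) = 1 - Dc).
  { destruct Hpid as [_ Hs1]. rewrite <- Hs1. unfold measure, Dc. rewrite <- fsum_minus.
    apply fsum_ext. intros. destruct (good_set A s eps x); ring. }
  assert (HDc : eps * Dc <= tail_prob n P pi A s).
  { rewrite (tail_prob_decompose n P Hst pi A s pi_nonneg_vec Hs). unfold Dc. rewrite <- fsum_scal_l.
    apply fsum_le. intros x Hx. pose proof (Hpi x Hx). unfold good_set.
    pose proof (tail_prob_nonneg n P Hst (kron x) A s (kron_nonneg_vec n x) Hs).
    destruct (Rle_dec (tail_prob n P (kron x) A s) eps) as [|Hn]; [|apply Rnot_le_lt in Hn]; nra. }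
  pose proof (tail_pi_bound A s b Hs HA).
  set (E := (1 - b) * exp (- (s * (b * (1 - lam2))))) in *.
  assert (Dc <= E / eps); [|lra].
  apply (Rmult_le_reg_l eps); auto. replace (eps * (E / eps)) with E by (field; lra). lra.
Qed.

Lemma hit_set_shift eps delta beta gamma t :
  0 < eps -> eps < delta -> delta < 1 -> 0 < beta -> beta <= gamma -> gamma < 1 ->
  hit_set n P pi mu gamma (delta - eps) t ->
  hit_set n P pi mu beta delta (t + / beta * t_rel lam2 * ln ((1 - beta) / ((1 - gamma) * eps))).
Proof.
  intros He Hed Hd1 Hb Hbg Hg1 [Ht Hset].
  pose proof (lambda2_bounds n P pi Hst Hpi Hrev lam2 Hl2).
  set (X := (1 - beta) / ((1 - gamma) * eps)).
  assert (HX : 0 < (1 - gamma) * eps) by (apply Rmult_lt_0_compat; lra).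
  assert (HX1 : 1 <= X).
  { unfold X. apply (Rmult_le_reg_r ((1 - gamma) * eps)); auto. unfold Rdiv.
    rewrite Rmult_assoc, Rinv_l by lra. nra. }
  set (s := / beta * t_rel lam2 * ln X).
  assert (Hs : 0 <= s).
  { unfold s, t_rel. apply Rmult_le_pos; [apply Rmult_le_pos; left; apply Rinv_0_lt_compat; lra|].
    rewrite <- ln_1. destruct (Rle_lt_or_eq_dec _ _ HX1) as [Hlt|<-]; [left; apply ln_increasing|]; lra. }
  assert (Hdecay : (1 - beta) * exp (- (s * (beta * (1 - lam2)))) = (1 - gamma) * eps).
  { replace (s * (beta * (1 - lam2))) with (ln X) by (unfold s, t_rel; field; lra).
    rewrite exp_Ropp, exp_ln by lra. unfold X. field. lra. }
  split; [lra|]. intros A HA.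
  set (G := good_set A s eps).
  assert (HG : gamma <= measure n pi G).
  { pose proof (good_set_measure A s eps beta He Hs HA) as Hm. rewrite Hdecay in Hm.
    replace ((1 - gamma) * eps / eps) with (1 - gamma) in Hm by (field; lra). unfold G. lra. }
  assert (HAG : forall y, A y = true -> G y = true).
  { intros y Ay. unfold G, good_set. destruct (Rle_dec _ eps) as [|Hn]; auto.
    exfalso. apply Hn. pose proof (tail_prob_start_in n P A y s Hst Ay Hs). lra. }
  assert (HGe : forall x, (x < n)%nat -> G x = true -> tail_prob n P (kron x) A s <= eps).
  { intros x Hx. unfold G, good_set. destruct (Rle_dec _ eps); auto. congruence. }
  pose proof (tail_composite n P Hst A G s eps mu t Hs (Rlt_le _ _ He) HAG HGe mu_nonneg_vec
                (proj2 Hmu) Ht).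
  specialize (Hset G HG). lra.
Qed.

End Hitting.

Theorem corollary4p3 (n : nat) (P : nat -> nat -> R) (pi mu : nat -> R)
  (lam2 : R) :
  stochastic n P ->
  irreducible n P ->
  prob_dist n pi -> (forall x, (x < n)%nat -> 0 < pi x) ->
  reversible n P pi ->
  prob_dist n mu ->
  is_lambda2 n P lam2 ->
  forall eps delta beta gamma : R,
    0 < eps -> eps < delta -> delta < 1 ->
    0 < beta -> beta <= gamma -> gamma < 1 ->
    hit n P pi mu gamma delta <= hit n P pi mu beta delta /\
    hit n P pi mu beta delta <=
      hit n P pi mu gamma (delta - eps)
      + / beta * t_rel lam2 * ln ((1 - beta) / ((1 - gamma) * eps)).
Proof.
  intros Hst Hirr Hpid Hpi Hrev Hmu Hl2 eps delta beta gamma He Hed Hd1 Hb Hbg Hg1.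
  assert (Hglb : forall g q, 0 < g -> 0 < q -> is_glb (hit_set n P pi mu g q) (hit n P pi mu g q))
    by (intros; apply hit_is_glb, (hit_set_nonempty n P pi mu lam2); auto).
  destruct (Hglb gamma delta) as [Hg1l _]; try lra.
  destruct (Hglb beta delta) as [Hb1l Hb1g]; try lra.
  destruct (Hglb gamma (delta - eps)) as [_ Hg2g]; try lra.
  split.
  - apply Hb1g. intros t Ht. apply Hg1l, (hit_set_threshold_mono n P pi mu beta); auto.
  - set (s := / beta * t_rel lam2 * ln ((1 - beta) / ((1 - gamma) * eps))).
    assert (hit n P pi mu beta delta - s <= hit n P pi mu gamma (delta - eps)); [|lra].
    apply Hg2g. intros t Ht.
    assert (hit n P pi mu beta delta <= t + s) by (apply Hb1l, hit_set_shift; auto). lra.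
Qed.
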